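(* Let $\theta$ satisfy Condition 1 with constants $0\le\sigma<1$, $\kappa\ge0$, $A\ge0$, and let $\beta\in\mathbb{R}$. Then the product $\mathfrak{S}_\theta=\prod_p(1+\theta_p/p)$ converges absolutely, and there is a constant $C(\theta,\beta)$ depending only on $\theta$ and $\beta$ such that for $x\ge2$ \[ \sum_{n\le x}n^\beta\phi_\theta(n)=\mathfrak{S}_\theta M_\beta(x)+C(\theta,\beta)+O_{\sigma,\kappa,A,\beta}\big(x^{\sigma+\beta}(\log x)^\kappa\big). \]
   Context: $p$ denotes a prime. Let $\theta:\mathbb{N}\to\mathbb{C}$, $n\mapsto\theta_n$, be a multiplicative function supported on square-free integers; the $\theta$-totient is $\phi_\theta(n)=\prod_{p\mid n}(1+\theta_p)=\sum_{d\mid n}\theta_d$. Condition 1: there are constants $0\le\sigma<1$ and $\kappa,A\ge0$ such that $\sum_{p\le x}|\theta_p|p^{-\sigma}\le\kappa\log\log x+A$ for all $x\ge2$. For real $\beta$, $M_\beta(x)=x^{\beta+1}/(\beta+1)$ if $\beta\ne-1$ and $M_{-1}(x)=\log x$. *)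

From Stdlib Require Import Reals Lra Lia List Arith ZArith.
Open Scope R_scope.

Definition Cx : Type := (R * R)%type.
Definition Cre (z : Cx) : R := fst z.
Definition Cim (z : Cx) : R := snd z.
Definition Czero : Cx := (0, 0).
Definition Cone : Cx := (1, 0).
Definition RtoC (r : R) : Cx := (r, 0).
Definition Cadd (z w : Cx) : Cx := (fst z + fst w, snd z + snd w).
Definition Csub (z w : Cx) : Cx := (fst z - fst w, snd z - snd w).
Definition Cmul (z w : Cx) : Cx :=
  (fst z * fst w - snd z * snd w, fst z * snd w + snd z * fst w).
Definition Cscal (r : R) (z : Cx) : Cx := (r * fst z, r * snd z).
Definition Cnorm (z : Cx) : R := sqrt (fst z * fst z + snd z * snd z).

Definition divb (d n : nat) : bool := Nat.eqb (n mod d) 0.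
Definition is_prime (p : nat) : Prop :=
  (1 < p)%nat /\ forall d : nat, Nat.divide d p -> d = 1%nat \/ d = p.
Definition primeb (p : nat) : bool :=
  Nat.ltb 1 p && forallb (fun d => negb (divb d p)) (seq 2 (p - 2)).
Definition squarefree (n : nat) : Prop :=
  forall p : nat, is_prime p -> ~ Nat.divide (p * p) n.

Definition multiplicative_sqfree (theta : nat -> Cx) : Prop :=
  theta 1%nat = Cone /\
  (forall m n : nat, (1 <= m)%nat -> (1 <= n)%nat -> Nat.gcd m n = 1%nat ->
     theta (m * n)%nat = Cmul (theta m) (theta n)) /\
  (forall n : nat, (1 <= n)%nat -> ~ squarefree n -> theta n = Czero).

Definition phi_theta (theta : nat -> Cx) (n : nat) : Cx :=
  fold_right Cadd Czero
    (map (fun d => if divb d n then theta d else Czero) (seq 1 n)).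

Definition nat_upto (x : R) : list nat := seq 1 (Z.to_nat (up x)).
Definition sumR_le (x : R) (f : nat -> R) : R :=
  fold_right Rplus 0
    (map (fun n => if Rle_dec (INR n) x then f n else 0) (nat_upto x)).
Definition sumC_le (x : R) (f : nat -> Cx) : Cx :=
  fold_right Cadd Czero
    (map (fun n => if Rle_dec (INR n) x then f n else Czero) (nat_upto x)).
Definition sumR_primes_le (x : R) (f : nat -> R) : R :=
  sumR_le x (fun p => if primeb p then f p else 0).
Definition prodC_primes_le (x : R) (f : nat -> Cx) : Cx :=
  fold_right Cmul Cone
    (map (fun n => if Rle_dec (INR n) x then (if primeb n then f n else Cone) else Cone)
         (nat_upto x)).

Definition Condition1 (theta : nat -> Cx) (sigma kappa A : R) : Prop :=
  forall x : R, 2 <= x ->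
    sumR_primes_le x (fun p => Cnorm (theta p) * Rpower (INR p) (- sigma))
      <= kappa * ln (ln x) + A.

Definition M (beta x : R) : R :=
  if Req_EM_T beta (-1) then ln x else Rpower x (beta + 1) / (beta + 1).

Definition Ccv (u : nat -> Cx) (l : Cx) : Prop :=
  forall eps : R, 0 < eps -> exists N : nat, forall n : nat, (n >= N)%nat ->
    Cnorm (Csub (u n) l) < eps.

From Stdlib Require Import Reals Lra Lia List ZArith Psatz Classical FunctionalExtensionality.
Open Scope R_scope.

(* Let w_d = |theta_d| d^(-sigma). By multiplicativity and Condition 1,
   sum_(d <= t) w_d <= prod_(p <= t) (1 + w_p) <= e^A (log t)^kappa, and summing over dyadic
   blocks turns this into sum_(d > x) w_d d^gam << x^gam (log x)^kappa for every gam < 0.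
   With gam = sigma - 1, sum_d theta_d / d converges absolutely; its partial sums and the
   partial Euler products differ by a tail of the same series, so both tend to S_theta.
   Since phi_theta = 1 * theta, sum_(n <= x) n^beta phi_theta(n) = sum_(d <= x) d^beta theta_d P(x / d)
   with P(y) = sum_(m <= y) m^beta = M_beta(y) + c + O(y^beta). The M_beta part is
   M_beta(x) sum_(d <= x) theta_d / d (plus the convergent sum of theta_d log d / d when
   beta = -1), the constant part c sum_(d <= x) d^beta theta_d converges when sigma + beta < 0,
   and the O(y^beta) part is O(x^(sigma + beta) (log x)^kappa) term by term. *)

Definition rsum (l : list nat) (f : nat -> R) : R := fold_right Rplus 0 (map f l).

Lemma rsum_nil f : rsum nil f = 0.
Proof. reflexivity. Qed.

Lemma rsum_cons a l f : rsum (a :: l) f = f a + rsum l f.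
Proof. reflexivity. Qed.

Lemma rsum_app l1 l2 f : rsum (l1 ++ l2) f = rsum l1 f + rsum l2 f.
Proof. induction l1 as [|a l IH]; simpl app; [rewrite !rsum_nil; lra|]. rewrite !rsum_cons, IH. lra. Qed.

Lemma rsum_ext l f g : (forall x, In x l -> f x = g x) -> rsum l f = rsum l g.
Proof. intros H. unfold rsum. f_equal. apply map_ext_in. exact H. Qed.

Lemma rsum_le l f g : (forall x, In x l -> f x <= g x) -> rsum l f <= rsum l g.
Proof.
  induction l as [|a l IH]; intros H; [rewrite !rsum_nil; lra|]. rewrite !rsum_cons.
  apply Rplus_le_compat; [apply H; left; reflexivity|].
  apply IH. intros x Hx. apply H. right. exact Hx.
Qed.

Lemma rsum_nonneg l f : (forall x, In x l -> 0 <= f x) -> 0 <= rsum l f.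
Proof.
  induction l as [|a l IH]; intros H; [rewrite !rsum_nil; lra|]. rewrite rsum_cons.
  apply Rplus_le_le_0_compat; [apply H; left; reflexivity|].
  apply IH. intros x Hx. apply H. right. exact Hx.
Qed.

Lemma rsum_plus l f g : rsum l (fun x => f x + g x) = rsum l f + rsum l g.
Proof. induction l; rewrite ?rsum_nil, ?rsum_cons in *; lra. Qed.

Lemma rsum_scal l c f : rsum l (fun x => c * f x) = c * rsum l f.
Proof. induction l; [rewrite !rsum_nil; ring|]. rewrite !rsum_cons, IHl. ring. Qed.

Lemma rsum_map l h f : rsum (map h l) f = rsum l (fun x => f (h x)).
Proof. unfold rsum. rewrite map_map. reflexivity. Qed.

Lemma rsum_filter (P : nat -> bool) l f :
  rsum l f = rsum (filter P l) f + rsum (filter (fun x => negb (P x)) l) f.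
Proof.
  induction l as [|a l IH]; simpl filter; [rewrite !rsum_nil; lra|].
  destruct (P a); simpl negb; rewrite ?rsum_cons, IH; lra.
Qed.

Lemma rsum_incl_eq s l f : NoDup l -> NoDup s -> incl l s ->
  (forall d, In d s -> ~ In d l -> f d = 0) -> rsum s f = rsum l f.
Proof.
  revert l. induction s as [|a s IH]; intros l Hl Hs Hinc Hz.
  - destruct l as [|b l]; [reflexivity|]. exfalso; apply (Hinc b); left; reflexivity.
  - inversion Hs as [|a' s' Ha Hs']; subst. rewrite rsum_cons.
    destruct (in_dec Nat.eq_dec a l) as [Hin|Hin].
    + destruct (in_split _ _ Hin) as [l1 [l2 ->]].
      rewrite rsum_app, rsum_cons, (IH (l1 ++ l2)), rsum_app; [lra| |exact Hs'| |].
      * eapply NoDup_remove_1; eauto.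
      * intros x Hx. assert (Hx' : In x (l1 ++ a :: l2)).
        { apply in_app_or in Hx; apply in_or_app; destruct Hx; [left|right; right]; auto. }
        destruct (Hinc x Hx') as [<-|E]; [|exact E].
        exfalso. eapply NoDup_remove_2; eauto.
      * intros d Hd Hnd. apply Hz; [right; exact Hd|].
        intros Hd2. apply in_app_or in Hd2. destruct Hd2 as [H1|[<-|H1]]; [| |].
        -- apply Hnd; apply in_or_app; left; exact H1.
        -- contradiction.
        -- apply Hnd; apply in_or_app; right; exact H1.
    + rewrite (Hz a (or_introl eq_refl) Hin), (IH l Hl Hs'); [lra| |].
      * intros x Hx. destruct (Hinc x Hx) as [<-|E]; [contradiction|exact E].
      * intros d Hd Hnd. apply Hz; [right; exact Hd|exact Hnd].
Qed.

Lemma rsum_incl_le l s f : NoDup l -> incl l s ->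
  (forall d, In d s -> 0 <= f d) -> rsum l f <= rsum s f.
Proof.
  revert s. induction l as [|a l IH]; intros s Hl Hinc Hpos.
  - apply rsum_nonneg; exact Hpos.
  - inversion Hl as [|a' l' Ha Hl']; subst.
    destruct (in_split a s (Hinc a (or_introl eq_refl))) as [s1 [s2 ->]].
    rewrite rsum_cons, rsum_app, rsum_cons.
    assert (rsum l f <= rsum (s1 ++ s2) f).
    { apply IH; [exact Hl'| |].
      - intros x Hx. assert (Hx' : In x (s1 ++ a :: s2)) by (apply Hinc; right; exact Hx).
        apply in_app_or in Hx'; apply in_or_app. destruct Hx' as [H1|[<-|H1]]; auto. contradiction.
      - intros d Hd; apply Hpos. apply in_app_or in Hd; apply in_or_app; destruct Hd; [left|right; right]; auto. }
    rewrite rsum_app in H. lra.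
Qed.

Lemma Cx_eq (z w : Cx) : fst z = fst w -> snd z = snd w -> z = w.
Proof. destruct z, w; simpl; intros; subst; reflexivity. Qed.

Definition csum (l : list nat) (f : nat -> Cx) : Cx := fold_right Cadd Czero (map f l).

Lemma csum_nil f : csum nil f = Czero.
Proof. reflexivity. Qed.

Lemma csum_cons a l f : csum (a :: l) f = Cadd (f a) (csum l f).
Proof. reflexivity. Qed.

Lemma csum_fst l f : fst (csum l f) = rsum l (fun n => fst (f n)).
Proof. induction l; [reflexivity|]. rewrite rsum_cons, <- IHl. reflexivity. Qed.

Lemma csum_snd l f : snd (csum l f) = rsum l (fun n => snd (f n)).
Proof. induction l; [reflexivity|]. rewrite rsum_cons, <- IHl. reflexivity. Qed.

Ltac Csplit :=
  apply Cx_eq; cbn [fst snd Cadd Csub Cmul Cscal Czero Cone];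
  rewrite ?csum_fst, ?csum_snd; cbn [fst snd Cadd Csub Cmul Cscal Czero Cone].

Lemma csum_app l1 l2 f : csum (l1 ++ l2) f = Cadd (csum l1 f) (csum l2 f).
Proof. Csplit; rewrite rsum_app; reflexivity. Qed.

Lemma csum_map l h f : csum (map h l) f = csum l (fun x => f (h x)).
Proof. unfold csum. rewrite map_map. reflexivity. Qed.

Lemma csum_ext l f g : (forall x, In x l -> f x = g x) -> csum l f = csum l g.
Proof. intros H. unfold csum. f_equal. apply map_ext_in. exact H. Qed.

Lemma csum_mul_r l f c : csum l (fun d => Cmul (f d) c) = Cmul (csum l f) c.
Proof.
  induction l as [|a l IH]; rewrite ?csum_nil, ?csum_cons; [destruct c; Csplit; ring|].
  rewrite IH. destruct (f a), c, (csum l f). Csplit; ring.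
Qed.

Lemma Cnorm_nonneg z : 0 <= Cnorm z.
Proof. apply sqrt_pos. Qed.

Lemma Cnorm_sq z : Cnorm z * Cnorm z = fst z * fst z + snd z * snd z.
Proof. unfold Cnorm. apply sqrt_sqrt. nra. Qed.

Lemma Cnorm_le_iff z b : 0 <= b -> fst z * fst z + snd z * snd z <= b * b -> Cnorm z <= b.
Proof.
  intros Hb H. apply Rsqr_incr_0_var; [|exact Hb]. unfold Rsqr. rewrite Cnorm_sq. exact H.
Qed.

Lemma Cnorm_fst z : Rabs (fst z) <= Cnorm z.
Proof.
  apply Rsqr_incr_0_var; [|apply Cnorm_nonneg]. unfold Rsqr. rewrite Cnorm_sq.
  rewrite <- Rabs_mult. rewrite Rabs_right by nra. nra.
Qed.

Lemma Cnorm_snd z : Rabs (snd z) <= Cnorm z.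
Proof.
  apply Rsqr_incr_0_var; [|apply Cnorm_nonneg]. unfold Rsqr. rewrite Cnorm_sq.
  rewrite <- Rabs_mult. rewrite Rabs_right by nra. nra.
Qed.

Lemma Cnorm_le_sum z : Cnorm z <= Rabs (fst z) + Rabs (snd z).
Proof.
  apply Cnorm_le_iff. apply Rplus_le_le_0_compat; apply Rabs_pos.
  pose proof (Rabs_pos (fst z)); pose proof (Rabs_pos (snd z)).
  assert (Rabs (fst z) * Rabs (fst z) = fst z * fst z) by (rewrite <- Rabs_mult; apply Rabs_right; nra).
  assert (Rabs (snd z) * Rabs (snd z) = snd z * snd z) by (rewrite <- Rabs_mult; apply Rabs_right; nra).
  nra.
Qed.

Lemma Cnorm_triang z w : Cnorm (Cadd z w) <= Cnorm z + Cnorm w.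
Proof.
  pose proof (Cnorm_nonneg z); pose proof (Cnorm_nonneg w).
  apply Cnorm_le_iff; [lra|]. pose proof (Cnorm_sq z) as Hz. pose proof (Cnorm_sq w) as Hw.
  destruct z as [a b], w as [c d]; cbn [fst snd Cadd] in *.
  assert (a * c + b * d <= Cnorm (a, b) * Cnorm (c, d)).
  { apply Rsqr_incr_0_var; [|apply Rmult_le_pos; assumption]. unfold Rsqr.
    replace (Cnorm (a, b) * Cnorm (c, d) * (Cnorm (a, b) * Cnorm (c, d))) with
      ((Cnorm (a, b) * Cnorm (a, b)) * (Cnorm (c, d) * Cnorm (c, d))) by ring.
    rewrite Hz, Hw. pose proof (Rle_0_sqr (a * d - b * c)). unfold Rsqr in *. nra. }
  nra.
Qed.

Lemma Cnorm_mul z w : Cnorm (Cmul z w) = Cnorm z * Cnorm w.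
Proof. unfold Cnorm. rewrite <- sqrt_mult by nra. f_equal. destruct z, w; simpl; ring. Qed.

Lemma Cnorm_scal r z : Cnorm (Cscal r z) = Rabs r * Cnorm z.
Proof.
  unfold Cnorm. rewrite <- sqrt_Rsqr_abs, <- sqrt_mult by (unfold Rsqr; nra).
  f_equal. destruct z; simpl; unfold Rsqr; ring.
Qed.

Lemma Cnorm_Czero : Cnorm Czero = 0.
Proof. unfold Cnorm; simpl. replace (0 * 0 + 0 * 0) with 0 by ring. apply sqrt_0. Qed.

Lemma Cnorm_Cone : Cnorm Cone = 1.
Proof. unfold Cnorm; simpl. replace (1 * 1 + 0 * 0) with 1 by ring. apply sqrt_1. Qed.

Lemma Cnorm_sub_sym z w : Cnorm (Csub z w) = Cnorm (Csub w z).
Proof. unfold Cnorm; f_equal; destruct z, w; simpl; ring. Qed.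

Lemma Cnorm_csum l f : Cnorm (csum l f) <= rsum l (fun n => Cnorm (f n)).
Proof.
  induction l as [|a l IH]; [rewrite rsum_nil, csum_nil, Cnorm_Czero; lra|].
  rewrite rsum_cons, csum_cons.
  eapply Rle_trans; [apply Cnorm_triang|]. lra.
Qed.

Lemma Cnorm_sub_triang z w u : Cnorm (Csub z u) <= Cnorm (Csub z w) + Cnorm (Csub w u).
Proof.
  replace (Csub z u) with (Cadd (Csub z w) (Csub w u)) by (Csplit; ring).
  apply Cnorm_triang.
Qed.

Lemma Cscal_sub c u w : Csub (Cscal c u) (Cscal c w) = Cscal c (Csub u w).
Proof. destruct u, w; Csplit; ring. Qed.

(* [up y] is the integer in ]y, y + 1], so for [y >= 0] this is the integer part of [y],
   and [nat_upto y] runs one step past it. *)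
Definition floor_nat (y : R) : nat := (Z.to_nat (up y) - 1)%nat.

Lemma up_to_nat y : 0 <= y ->
  Z.to_nat (up y) = S (floor_nat y) /\ INR (S (floor_nat y)) = IZR (up y).
Proof.
  intros Hy. destruct (archimed y) as [H1 H2].
  assert (Hpos : (0 < up y)%Z) by (apply lt_0_IZR; lra).
  unfold floor_nat. remember (Z.to_nat (up y)) as k.
  assert (Hk : Z.of_nat k = up y) by (subst; apply Z2Nat.id; lia).
  split; [lia|]. replace (S (k - 1)) with k by lia. rewrite INR_IZR_INZ, Hk. reflexivity.
Qed.

Lemma floor_nat_spec y : 0 <= y -> INR (floor_nat y) <= y < INR (floor_nat y) + 1.
Proof.
  intros Hy. destruct (up_to_nat y Hy) as [_ H]. rewrite S_INR in H.
  destruct (archimed y). lra.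
Qed.

Lemma floor_nat_le_iff y n : 0 <= y -> ((n <= floor_nat y)%nat <-> INR n <= y).
Proof.
  intros Hy. pose proof (floor_nat_spec y Hy). split; intros H1.
  - apply le_INR in H1. lra.
  - destruct (le_lt_dec n (floor_nat y)) as [|Hl]; [assumption|]. exfalso.
    apply le_INR in Hl. rewrite S_INR in Hl. lra.
Qed.

Lemma floor_nat_INR n : floor_nat (INR n) = n.
Proof.
  pose proof (pos_INR n). apply Nat.le_antisymm.
  - pose proof (floor_nat_spec (INR n) H) as [Hle _].
    destruct (le_lt_dec (floor_nat (INR n)) n) as [|Hl]; [assumption|].
    apply le_INR in Hl. rewrite S_INR in Hl. lra.
  - apply floor_nat_le_iff; lra.
Qed.

Lemma floor_nat_le x y : 0 <= x -> x <= y -> (floor_nat x <= floor_nat y)%nat.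
Proof. intros Hx Hxy. apply floor_nat_le_iff; [lra|]. pose proof (floor_nat_spec x Hx). lra. Qed.

Lemma floor_nat_div x d : 0 <= x -> (1 <= d)%nat -> floor_nat (x / INR d) = (floor_nat x / d)%nat.
Proof.
  intros Hx Hd.
  assert (HdR : 0 < INR d) by (apply lt_0_INR; lia).
  assert (Hxd : 0 <= x / INR d) by (apply Rmult_le_pos; [lra|left; apply Rinv_0_lt_compat; lra]).
  assert (Hiff : forall m, (m <= floor_nat (x / INR d))%nat <-> (m <= floor_nat x / d)%nat).
  { intros m. rewrite (floor_nat_le_iff _ _ Hxd). split; intros H.
    - apply Nat.div_le_lower_bound; [lia|]. apply floor_nat_le_iff; [exact Hx|].
      rewrite mult_INR. apply (Rmult_le_compat_l (INR d)) in H; [|lra].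
      replace (INR d * (x / INR d)) with x in H by (field; lra). lra.
    - assert (Hmd : (d * m <= floor_nat x)%nat).
      { eapply Nat.le_trans; [apply Nat.mul_le_mono_l; exact H|]. apply Nat.Div0.mul_div_le. }
      apply (floor_nat_le_iff x _ Hx) in Hmd. rewrite mult_INR in Hmd.
      apply (Rmult_le_reg_l (INR d)); [lra|].
      replace (INR d * (x / INR d)) with x by (field; lra). lra. }
  apply Nat.le_antisymm; apply Hiff; lia.
Qed.

Definition rsum_to (N : nat) (f : nat -> R) : R := rsum (seq 1 N) f.
Definition csum_to (N : nat) (f : nat -> Cx) : Cx := csum (seq 1 N) f.

Lemma rsum_to_0 f : rsum_to 0 f = 0.
Proof. reflexivity. Qed.

Lemma rsum_to_S N f : rsum_to (S N) f = rsum_to N f + f (S N).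
Proof.
  unfold rsum_to. rewrite seq_S, rsum_app, rsum_cons, rsum_nil.
  replace (1 + N)%nat with (S N) by lia. ring.
Qed.

Lemma rsum_to_split m n f : (m <= n)%nat -> rsum_to n f = rsum_to m f + rsum (seq (S m) (n - m)) f.
Proof.
  intros H. unfold rsum_to. replace n with (m + (n - m))%nat at 1 by lia.
  rewrite seq_app, rsum_app. replace (1 + m)%nat with (S m) by lia. reflexivity.
Qed.

Lemma csum_to_split N M u : (N <= M)%nat ->
  csum_to M u = Cadd (csum_to N u) (csum (seq (S N) (M - N)) u).
Proof.
  intros H. unfold csum_to. replace M with (N + (M - N))%nat at 1 by lia.
  rewrite seq_app, csum_app. replace (1 + N)%nat with (S N) by lia. reflexivity.
Qed.

Lemma rsum_to_nonneg n f : (forall d, 0 <= f d) -> 0 <= rsum_to n f.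
Proof. intros H; apply rsum_nonneg; intros; apply H. Qed.

Lemma rsum_to_le_mono m n f : (forall d, 0 <= f d) -> (m <= n)%nat -> rsum_to m f <= rsum_to n f.
Proof.
  intros H Hmn. rewrite (rsum_to_split m n f Hmn).
  assert (0 <= rsum (seq (S m) (n - m)) f) by (apply rsum_nonneg; intros; apply H). lra.
Qed.

Lemma rsum_to_diff_le N M w g : (N <= M)%nat -> (forall d, (N < d)%nat -> w d <= g d) ->
  rsum_to M w - rsum_to N w <= rsum_to M g - rsum_to N g.
Proof.
  intros H Hw. rewrite (rsum_to_split N M w H), (rsum_to_split N M g H).
  assert (rsum (seq (S N) (M - N)) w <= rsum (seq (S N) (M - N)) g).
  { apply rsum_le. intros d Hd. apply in_seq in Hd. apply Hw. lia. }
  lra.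
Qed.

Lemma csum_to_diff_le u w N M : (N <= M)%nat -> (forall d, (N < d)%nat -> Cnorm (u d) <= w d) ->
  Cnorm (Csub (csum_to M u) (csum_to N u)) <= rsum_to M w - rsum_to N w.
Proof.
  intros H Hw. rewrite (csum_to_split N M u H), (rsum_to_split N M w H).
  replace (Csub (Cadd (csum_to N u) (csum (seq (S N) (M - N)) u)) (csum_to N u))
    with (csum (seq (S N) (M - N)) u)
    by (destruct (csum_to N u), (csum (seq (S N) (M - N)) u); Csplit; ring).
  eapply Rle_trans; [apply Cnorm_csum|].
  replace (rsum_to N w + rsum (seq (S N) (M - N)) w - rsum_to N w) with (rsum (seq (S N) (M - N)) w) by ring.
  apply rsum_le. intros d Hd. apply in_seq in Hd. apply Hw. lia.
Qed.

Lemma nat_upto_eq y : 0 <= y -> nat_upto y = seq 1 (floor_nat y) ++ S (floor_nat y) :: nil.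
Proof. intros Hy. unfold nat_upto. destruct (up_to_nat y Hy) as [-> _]. apply seq_S. Qed.

Lemma sumR_le_eq y f : 0 <= y -> sumR_le y f = rsum_to (floor_nat y) f.
Proof.
  intros Hy. unfold sumR_le.
  fold (rsum (nat_upto y) (fun n => if Rle_dec (INR n) y then f n else 0)).
  pose proof (floor_nat_spec y Hy).
  rewrite nat_upto_eq, rsum_app, rsum_cons by exact Hy.
  destruct (Rle_dec (INR (S (floor_nat y))) y) as [Hc|_]; [rewrite S_INR in Hc; lra|].
  rewrite rsum_nil, !Rplus_0_r. apply rsum_ext. intros x Hx.
  apply in_seq in Hx. destruct (Rle_dec (INR x) y) as [|Hn]; [reflexivity|].
  exfalso; apply Hn. apply floor_nat_le_iff; [lra|lia].
Qed.

Lemma sumC_le_eq y f : 0 <= y -> sumC_le y f = csum_to (floor_nat y) f.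
Proof.
  intros Hy. unfold sumC_le.
  fold (csum (nat_upto y) (fun n => if Rle_dec (INR n) y then f n else Czero)).
  pose proof (floor_nat_spec y Hy).
  rewrite nat_upto_eq, csum_app by exact Hy.
  unfold csum_to. Csplit; rewrite rsum_cons, rsum_nil;
    (destruct (Rle_dec (INR (S (floor_nat y))) y) as [Hc|_]; [rewrite S_INR in Hc; lra|]);
    cbn [fst snd Czero]; rewrite !Rplus_0_r; apply rsum_ext; intros x Hx; apply in_seq in Hx;
    (destruct (Rle_dec (INR x) y) as [|Hn]; [reflexivity|]);
    exfalso; apply Hn; apply floor_nat_le_iff; (lra || lia).
Qed.

Definition cprod (l : list nat) (g : nat -> Cx) : Cx := fold_right Cmul Cone (map g l).
Definition cprod_to (N : nat) (g : nat -> Cx) : Cx := cprod (seq 1 N) g.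

Lemma Cmul_assoc a b c : Cmul a (Cmul b c) = Cmul (Cmul a b) c.
Proof. destruct a, b, c; Csplit; ring. Qed.

Lemma Cmul_one_r a : Cmul a Cone = a.
Proof. destruct a; Csplit; ring. Qed.

Lemma cprod_app1 l a g : cprod (l ++ a :: nil) g = Cmul (cprod l g) (g a).
Proof.
  induction l as [|b l IH].
  - unfold cprod; simpl. rewrite Cmul_one_r. destruct (g a); Csplit; ring.
  - unfold cprod in *. simpl. rewrite IH. apply Cmul_assoc.
Qed.

Lemma cprod_to_S N g : cprod_to (S N) g = Cmul (cprod_to N g) (g (S N)).
Proof. unfold cprod_to. rewrite seq_S, cprod_app1. replace (1 + N)%nat with (S N) by lia. reflexivity. Qed.

Lemma prodC_primes_le_eq N f : prodC_primes_le (INR N) f =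
  cprod_to N (fun n => if primeb n then f n else Cone).
Proof.
  unfold prodC_primes_le. rewrite nat_upto_eq, floor_nat_INR by apply pos_INR.
  fold (cprod (seq 1 N ++ S N :: nil)
          (fun n => if Rle_dec (INR n) (INR N) then (if primeb n then f n else Cone) else Cone)).
  rewrite cprod_app1.
  destruct (Rle_dec (INR (S N)) (INR N)) as [Hc|_]; [rewrite S_INR in Hc; lra|].
  rewrite Cmul_one_r. unfold cprod_to, cprod. f_equal. apply map_ext_in. intros x Hx.
  apply in_seq in Hx. destruct (Rle_dec (INR x) (INR N)) as [|Hn]; [reflexivity|].
  exfalso; apply Hn; apply le_INR; lia.
Qed.

Lemma primeb_spec p : primeb p = true <-> is_prime p.
Proof.
  unfold primeb, is_prime. rewrite Bool.andb_true_iff, Nat.ltb_lt, forallb_forall. split.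
  - intros [H1 H2]. split; [exact H1|]. intros d Hd.
    assert (Hd0 : d <> 0%nat) by (intros ->; destruct Hd as [k Hk]; lia).
    assert (Hdp : (d <= p)%nat) by (apply Nat.divide_pos_le; [lia|exact Hd]).
    destruct (Nat.eq_dec d 1); [left; assumption|].
    destruct (Nat.eq_dec d p); [right; assumption|].
    exfalso. assert (Hin : In d (seq 2 (p - 2))) by (apply in_seq; lia).
    specialize (H2 d Hin). unfold divb in H2.
    apply Nat.Lcm0.mod_divide in Hd. rewrite Hd in H2. discriminate.
  - intros [H1 H2]. split; [exact H1|]. intros d Hin. apply in_seq in Hin.
    unfold divb. destruct (Nat.eqb_spec (p mod d) 0) as [E|E]; [|reflexivity].
    exfalso. apply Nat.Lcm0.mod_divide in E. destruct (H2 d E); lia.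
Qed.

Lemma prime_divide_mul q a b : is_prime q -> Nat.divide q (a * b) -> Nat.divide q a \/ Nat.divide q b.
Proof.
  intros Hq Hd. destruct (proj2 Hq (Nat.gcd q a) (Nat.gcd_divide_l q a)) as [E|E].
  - right. eapply Nat.gauss; eauto.
  - left. rewrite <- E. apply Nat.gcd_divide_r.
Qed.

Lemma prime_coprime p d : is_prime p -> ~ Nat.divide p d -> Nat.gcd d p = 1%nat.
Proof.
  intros Hp Hn. destruct (proj2 Hp (Nat.gcd d p) (Nat.gcd_divide_r d p)) as [E|E]; [exact E|].
  exfalso; apply Hn. rewrite <- E. apply Nat.gcd_divide_l.
Qed.

Lemma prime_divisor_exists d : (2 <= d)%nat -> exists q, is_prime q /\ Nat.divide q d.
Proof.
  induction d as [d IH] using (well_founded_induction lt_wf). intros Hd.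
  destruct (primeb d) eqn:E.
  - exists d. split; [apply primeb_spec; exact E|apply Nat.divide_refl].
  - assert (Hnp : ~ is_prime d) by (intros H; apply primeb_spec in H; congruence).
    assert (exists e, Nat.divide e d /\ e <> 1%nat /\ e <> d) as [e [He1 [He2 He3]]].
    { apply NNPP. intros Hne. apply Hnp. split; [lia|].
      intros e He. apply NNPP. intros Hc. apply Hne. exists e.
      split; [exact He|]. split; intro; apply Hc; [left|right]; assumption. }
    assert (He0 : e <> 0%nat) by (intros ->; destruct He1 as [k Hk]; lia).
    assert (e <= d)%nat by (apply Nat.divide_pos_le; [lia|exact He1]).
    destruct (IH e ltac:(lia) ltac:(lia)) as [q [Hq Hqe]].
    exists q. split; [exact Hq|]. eapply Nat.divide_trans; eauto.
Qed.

Fixpoint smooth_sqfree (n : nat) : list nat :=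
  match n with
  | O => 1%nat :: nil
  | S m => if primeb (S m) then smooth_sqfree m ++ map (fun d => (d * S m)%nat) (smooth_sqfree m)
           else smooth_sqfree m
  end.

Lemma smooth_sqfree_spec n d : In d (smooth_sqfree n) ->
  (1 <= d)%nat /\ (forall q, is_prime q -> Nat.divide q d -> (q <= n)%nat).
Proof.
  revert d. induction n as [|n IH]; intros d Hd; simpl in Hd.
  - destruct Hd as [<-|[]]. split; [lia|]. intros q Hq Hd.
    apply Nat.divide_1_r in Hd. subst. destruct Hq; lia.
  - destruct (primeb (S n)) eqn:Ep; [apply in_app_or in Hd; destruct Hd as [Hd|Hd]|].
    2:{ apply in_map_iff in Hd. destruct Hd as [d' [<- Hd']].
        destruct (IH d' Hd') as [H1 H2]. split; [nia|]. intros q Hq Hqd.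
        destruct (prime_divide_mul q _ _ Hq Hqd) as [Hq1|Hq1].
        - specialize (H2 q Hq Hq1); lia.
        - apply Nat.divide_pos_le; [lia|exact Hq1]. }
    all: destruct (IH d Hd) as [H1 H2]; split; [exact H1|];
      intros q Hq Hqd; specialize (H2 q Hq Hqd); lia.
Qed.

Lemma smooth_sqfree_coprime n d : In d (smooth_sqfree n) -> is_prime (S n) ->
  (1 <= d)%nat /\ Nat.gcd d (S n) = 1%nat.
Proof.
  intros Hd Hp. destruct (smooth_sqfree_spec n d Hd) as [Hd1 Hd2]. split; [exact Hd1|].
  apply prime_coprime; [exact Hp|]. intros Hdiv. specialize (Hd2 (S n) Hp Hdiv). lia.
Qed.

Lemma NoDup_smooth_sqfree n : NoDup (smooth_sqfree n).
Proof.
  induction n as [|n IH]; simpl; [constructor; [intros []|constructor]|].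
  destruct (primeb (S n)) eqn:Ep; [|exact IH].
  apply NoDup_app; [exact IH| |].
  - apply NoDup_map_NoDup_ForallPairs; [intros a b _ _ E; nia|exact IH].
  - intros a Ha Hb. apply in_map_iff in Hb. destruct Hb as [d' [<- Hd']].
    destruct (smooth_sqfree_coprime n _ Ha (proj1 (primeb_spec _) Ep)) as [_ Hg].
    rewrite Nat.gcd_comm, (Nat.mul_comm d'), Nat.gcd_mul_diag_l in Hg by lia.
    apply primeb_spec in Ep. destruct Ep; lia.
Qed.

Lemma in_smooth_sqfree n d : (1 <= d)%nat -> squarefree d ->
  (forall q, is_prime q -> Nat.divide q d -> (q <= n)%nat) -> In d (smooth_sqfree n).
Proof.
  revert d. induction n as [|n IH]; intros d Hd Hsq Hf; simpl.
  - destruct (Nat.eq_dec d 1); [left; lia|]. exfalso.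
    destruct (prime_divisor_exists d ltac:(lia)) as [q [Hq Hqd]].
    specialize (Hf q Hq Hqd). destruct Hq; lia.
  - assert (Hle : forall q, is_prime q -> Nat.divide q d -> q <> S n -> (q <= n)%nat).
    { intros q Hq Hqd Hne. specialize (Hf q Hq Hqd). lia. }
    destruct (primeb (S n)) eqn:Ep.
    2:{ apply IH; [exact Hd|exact Hsq|]. intros q Hq Hqd. apply Hle; [exact Hq|exact Hqd|].
        intros ->. apply primeb_spec in Hq. congruence. }
    apply in_or_app. destruct (Nat.eq_dec (d mod S n) 0) as [Hm|Hm].
    + apply Nat.Lcm0.mod_divide in Hm. destruct Hm as [k Hk]. right.
      apply in_map_iff. exists k. split; [lia|]. apply IH; [nia| |].
      * intros p Hp Hpk. apply (Hsq p Hp). rewrite Hk.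
        destruct Hpk as [j ->]. exists (j * S n)%nat. ring.
      * intros q Hq Hqk. apply Hle; [exact Hq|rewrite Hk; apply Nat.divide_mul_l; exact Hqk|].
        intros ->. apply (Hsq (S n) Hq). rewrite Hk. apply Nat.mul_divide_mono_r. exact Hqk.
    + left. apply IH; [exact Hd|exact Hsq|]. intros q Hq Hqd. apply Hle; [exact Hq|exact Hqd|].
      intros ->. apply Hm. apply Nat.Lcm0.mod_divide. exact Hqd.
Qed.

Definition cmultiplicative (g : nat -> Cx) : Prop :=
  g 1%nat = Cone /\ forall a b, (1 <= a)%nat -> (1 <= b)%nat -> Nat.gcd a b = 1%nat ->
    g (a * b)%nat = Cmul (g a) (g b).

Lemma csum_smooth_sqfree_euler g n : cmultiplicative g ->
  csum (smooth_sqfree n) g = cprod_to n (fun m => if primeb m then Cadd Cone (g m) else Cone).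
Proof.
  intros [H1 Hm]. induction n as [|n IH].
  - simpl. rewrite csum_cons, csum_nil, H1. unfold cprod_to, cprod. simpl. Csplit; ring.
  - rewrite cprod_to_S. simpl smooth_sqfree. destruct (primeb (S n)) eqn:Ep.
    + rewrite csum_app, csum_map, IH.
      rewrite (csum_ext _ _ (fun d => Cmul (g d) (g (S n)))).
      * rewrite csum_mul_r, IH. destruct (cprod_to n _), (g (S n)). Csplit; ring.
      * intros d Hd. destruct (smooth_sqfree_coprime n d Hd (proj1 (primeb_spec _) Ep)) as [Hd1 Hg].
        apply Hm; [exact Hd1|lia|exact Hg].
    + rewrite IH, Cmul_one_r. reflexivity.
Qed.

(* The sum over [smooth_sqfree n] is the Euler product [prod_(p <= n) (1 + a p)], and [1 + t <= exp t]. *)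
Lemma rsum_smooth_sqfree_le_exp (a : nat -> R) n :
  a 1%nat = 1 -> (forall d, 0 <= a d) ->
  (forall x y, (1 <= x)%nat -> (1 <= y)%nat -> Nat.gcd x y = 1%nat -> a (x * y)%nat = a x * a y) ->
  rsum (smooth_sqfree n) a <= exp (rsum_to n (fun p => if primeb p then a p else 0)).
Proof.
  intros H1 Hpos Hm. induction n as [|n IH].
  - simpl. rewrite rsum_cons, rsum_nil, H1. unfold rsum_to. rewrite rsum_nil, exp_0. lra.
  - rewrite rsum_to_S. simpl smooth_sqfree. destruct (primeb (S n)) eqn:Ep; [|rewrite Rplus_0_r; exact IH].
    rewrite rsum_app, rsum_map, exp_plus.
    rewrite (rsum_ext (smooth_sqfree n) (fun x => a (x * S n)%nat) (fun d => a (S n) * a d)).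
    + rewrite rsum_scal.
      assert (1 + a (S n) <= exp (a (S n))).
      { destruct (Req_dec (a (S n)) 0) as [E|E]; [rewrite E, exp_0; lra|].
        left; apply exp_ineq1; exact E. }
      assert (0 <= rsum (smooth_sqfree n) a) by (apply rsum_nonneg; intros; apply Hpos).
      pose proof (Hpos (S n)).
      replace (rsum (smooth_sqfree n) a + a (S n) * rsum (smooth_sqfree n) a)
        with (rsum (smooth_sqfree n) a * (1 + a (S n))) by ring.
      apply Rmult_le_compat; lra.
    + intros d Hd. destruct (smooth_sqfree_coprime n d Hd (proj1 (primeb_spec _) Ep)) as [Hd1 Hg].
      rewrite Hm; [ring|exact Hd1|lia|exact Hg].
Qed.

Lemma list_bound (l : list nat) : exists M, forall d, In d l -> (d <= M)%nat.
Proof.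
  induction l as [|a l [M HM]]; [exists 0%nat; intros d []|].
  exists (Nat.max a M). intros d [<-|Hd]; [lia|]. specialize (HM d Hd); lia.
Qed.

Lemma exp_le a b : a <= b -> exp a <= exp b.
Proof. intros [H|<-]; [left; apply exp_increasing; exact H|lra]. Qed.

Lemma ln_le a b : 0 < a -> a <= b -> ln a <= ln b.
Proof. intros Ha [H|<-]; [left; apply ln_increasing; lra|lra]. Qed.

Lemma Rpower_pos x y : 0 < Rpower x y.
Proof. apply exp_pos. Qed.

Lemma Rpower_1_base y : Rpower 1 y = 1.
Proof. unfold Rpower. rewrite ln_1, Rmult_0_r, exp_0. reflexivity. Qed.

Lemma Rpower_le_base_neg a b y : y <= 0 -> 0 < a -> a <= b -> Rpower b y <= Rpower a y.
Proof.
  intros Hy Ha Hab. apply exp_le.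
  assert (ln a <= ln b) by (apply ln_le; lra). nra.
Qed.

Lemma Rinv_Rpower d : 0 < d -> / d = Rpower d (-1).
Proof. intros Hd. unfold Rpower. replace (-1 * ln d) with (- ln d) by ring. rewrite exp_Ropp, exp_ln; auto. Qed.

Lemma Rpower_div x d y : 0 < x -> 0 < d -> Rpower (x / d) y = Rpower x y * Rpower d (- y).
Proof.
  intros Hx Hd. unfold Rpower, Rdiv. rewrite ln_mult, ln_Rinv by (try apply Rinv_0_lt_compat; lra).
  rewrite <- exp_plus. f_equal. ring.
Qed.

Lemma ln2_pos : 0 < ln 2.
Proof. rewrite <- ln_1. apply ln_increasing; lra. Qed.

Lemma ln_le_sub1 w : 0 < w -> ln w <= w - 1.
Proof.
  intros Hw. assert (w <= exp (w - 1)).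
  { destruct (Req_dec (w - 1) 0) as [E|E]; [rewrite E, exp_0; lra|].
    left. pose proof (exp_ineq1 (w - 1) E). lra. }
  rewrite <- (ln_exp (w - 1)). apply ln_le; assumption.
Qed.

Lemma ln_le_Rpower u dl : 1 <= u -> 0 < dl -> ln u <= Rpower u dl / dl.
Proof.
  intros Hu Hd. pose proof (ln_le_sub1 _ (Rpower_pos u dl)) as H. rewrite ln_Rpower in H.
  apply (Rmult_le_reg_l dl); [lra|]. unfold Rdiv. field_simplify; lra.
Qed.

Lemma Rpower_le_exp (kappa lam : R) : 0 <= kappa -> 0 < lam ->
  exists C, 0 < C /\ forall v, 0 < v -> Rpower v kappa <= C * exp (lam * v).
Proof.
  intros Hk Hl. destruct (Req_dec kappa 0) as [->|E].
  - exists 1. split; [lra|]. intros v Hv. rewrite Rpower_O by lra.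
    assert (1 <= exp (lam * v)) by (rewrite <- exp_0; apply exp_le; nra). lra.
  - exists (Rpower (kappa / lam) kappa). split; [apply Rpower_pos|]. intros v Hv.
    set (w := lam * v / kappa).
    assert (Hw : 0 < w) by (unfold w; apply Rdiv_lt_0_compat; nra).
    replace v with ((kappa / lam) * w) at 1 by (unfold w; field; lra).
    rewrite <- Rpower_mult_distr by (first [exact Hw | apply Rdiv_lt_0_compat; lra]).
    apply Rmult_le_compat_l; [left; apply Rpower_pos|].
    apply exp_le. pose proof (ln_le_sub1 w Hw).
    replace (lam * v) with (kappa * w) by (unfold w; field; lra). nra.
Qed.

Definition log_power (gam kappa x : R) : R := Rpower x gam * Rpower (ln x) kappa.

Lemma log_power_nonneg gam kappa x : 0 <= log_power gam kappa x.
Proof. unfold log_power. pose proof (Rpower_pos x gam). pose proof (Rpower_pos (ln x) kappa). nra. Qed.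

Lemma log_power_decay (gam kappa K : R) : gam < 0 -> 0 <= kappa -> 0 <= K ->
  forall eps, 0 < eps -> exists N0 : nat, (2 <= N0)%nat /\
    forall x, INR N0 <= x -> K * log_power gam kappa x < eps.
Proof.
  intros Hg Hk HK eps Heps.
  destruct (Rpower_le_exp kappa (- gam / 2) Hk ltac:(lra)) as [C [HC HCb]].
  set (e1 := eps / (K * C + 1)).
  assert (He1 : 0 < e1) by (unfold e1; apply Rdiv_lt_0_compat; [lra|nra]).
  set (x0 := exp (ln e1 * 2 / gam)).
  exists (Nat.max 2 (S (floor_nat x0))). split; [lia|]. intros x Hx.
  assert (Hx2 : 2 <= x).
  { eapply Rle_trans; [|exact Hx]. replace 2 with (INR 2) by (simpl; lra). apply le_INR; lia. }
  assert (Hxx0 : x0 < x).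
  { pose proof (floor_nat_spec x0 ltac:(unfold x0; left; apply exp_pos)).
    assert (INR (S (floor_nat x0)) <= INR (Nat.max 2 (S (floor_nat x0)))) by (apply le_INR; lia).
    rewrite S_INR in H0. lra. }
  assert (Hlx : 0 < ln x) by (pose proof ln2_pos; pose proof (ln_le 2 x ltac:(lra) Hx2); lra).
  assert (Hsmall : exp (gam / 2 * ln x) < e1).
  { rewrite <- (exp_ln e1) by exact He1. apply exp_increasing.
    assert (ln x0 < ln x) by (apply ln_increasing; [apply exp_pos|exact Hxx0]).
    unfold x0 in H. rewrite ln_exp in H.
    apply (Rmult_lt_compat_l (- gam / 2)) in H; [|lra].
    replace (- gam / 2 * (ln e1 * 2 / gam)) with (- ln e1) in H by (field; lra). lra. }
  assert (Hlp : log_power gam kappa x <= C * exp (gam / 2 * ln x)).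
  { replace (exp (gam / 2 * ln x)) with (Rpower x gam * exp (- gam / 2 * ln x))
      by (unfold Rpower; rewrite <- exp_plus; f_equal; field).
    unfold log_power. pose proof (Rpower_pos x gam). pose proof (HCb (ln x) Hlx). nra. }
  assert (K * C * e1 < eps).
  { unfold e1. apply (Rmult_lt_reg_r (K * C + 1)); [nra|]. field_simplify; [|nra]. nra. }
  apply Rle_lt_trans with (K * C * e1); [|assumption].
  rewrite Rmult_assoc. apply Rmult_le_compat_l; [exact HK|].
  eapply Rle_trans; [exact Hlp|]. apply Rmult_le_compat_l; lra.
Qed.

Definition log_power_bounded (kappa B : R) (a : nat -> R) : Prop :=
  forall t, 2 <= t -> rsum_to (floor_nat t) a <= B * Rpower (ln t) kappa.

Definition tail_bound (kappa gam K : R) : Prop :=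
  forall (a : nat -> R) (B : R), (forall d, 0 <= a d) -> 0 <= B -> log_power_bounded kappa B a ->
  forall x, 2 <= x -> forall M, (floor_nat x <= M)%nat ->
    rsum_to M (fun d => a d * Rpower (INR d) gam) - rsum_to (floor_nat x) (fun d => a d * Rpower (INR d) gam)
    <= K * B * log_power gam kappa x.

Lemma exp_mul_INR j c : exp (INR j * c) = exp c ^ j.
Proof.
  induction j as [|j IH]; simpl pow; [rewrite Rmult_0_l, exp_0; reflexivity|].
  rewrite S_INR, Rmult_plus_distr_r, Rmult_1_l, exp_plus, IH. ring.
Qed.

Lemma geom_sum_le r k : 0 <= r < 1 -> rsum (seq 0 k) (fun j => r ^ j) <= / (1 - r).
Proof.
  intros Hr. assert (rsum (seq 0 k) (fun j => r ^ j) = (1 - r ^ k) / (1 - r)).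
  { induction k as [|k IH]; [rewrite rsum_nil; simpl; field; lra|].
    rewrite seq_S, rsum_app, rsum_cons, rsum_nil, IH. simpl. field. lra. }
  rewrite H. pose proof (pow_le r k (proj1 Hr)).
  apply Rmult_le_reg_l with (1 - r); [lra|]. field_simplify; lra.
Qed.

Lemma pow2_ge n : INR n + 1 <= 2 ^ n.
Proof.
  induction n as [|n IH]; simpl pow; [simpl; lra|]. rewrite S_INR.
  assert (1 <= 2 ^ n) by (apply pow_R1_Rle; lra). lra.
Qed.

Lemma dyadic_point_ge2 x j : 2 <= x -> 2 <= x * 2 ^ j.
Proof. intros Hx. assert (1 <= 2 ^ j) by (apply pow_R1_Rle; lra). nra. Qed.

(* On the block ]x 2^j, x 2^(j+1)] the factor d^gam is at most (x 2^j)^gam. *)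
Lemma dyadic_block_sum kappa gam (a : nat -> R) B x : gam <= 0 -> (forall d, 0 <= a d) ->
  log_power_bounded kappa B a -> 2 <= x -> forall k,
  rsum_to (floor_nat (x * 2 ^ k)) (fun d => a d * Rpower (INR d) gam)
    - rsum_to (floor_nat x) (fun d => a d * Rpower (INR d) gam)
  <= rsum (seq 0 k) (fun j => Rpower (x * 2 ^ j) gam * (B * Rpower (ln (x * 2 ^ S j)) kappa)).
Proof.
  intros Hg Ha HB Hx. set (g := fun d => a d * Rpower (INR d) gam).
  induction k as [|k IH]; [simpl pow; rewrite Rmult_1_r, rsum_nil; lra|].
  rewrite seq_S, rsum_app, rsum_cons, rsum_nil. simpl (0 + k)%nat.
  pose proof (dyadic_point_ge2 x k Hx) as Hxk.
  set (y := x * 2 ^ k) in *.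
  assert (Hy2 : x * 2 ^ S k = 2 * y) by (unfold y; simpl pow; ring).
  assert (Hle : (floor_nat y <= floor_nat (x * 2 ^ S k))%nat) by (apply floor_nat_le; lra).
  rewrite (rsum_to_split _ _ g Hle).
  set (blk := seq (S (floor_nat y)) (floor_nat (x * 2 ^ S k) - floor_nat y)).
  assert (Hblock : rsum blk g <= Rpower y gam * rsum blk a).
  { rewrite <- rsum_scal. apply rsum_le. intros d Hd. apply in_seq in Hd. unfold g.
    rewrite Rmult_comm. apply Rmult_le_compat_r; [apply Ha|].
    apply Rpower_le_base_neg; [lra|lra|].
    pose proof (floor_nat_spec y ltac:(lra)).
    assert (INR (S (floor_nat y)) <= INR d) by (apply le_INR; lia). rewrite S_INR in H0. lra. }
  assert (Hs : rsum blk a <= B * Rpower (ln (x * 2 ^ S k)) kappa).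
  { eapply Rle_trans; [|apply HB; apply dyadic_point_ge2; exact Hx].
    rewrite (rsum_to_split _ _ a Hle). pose proof (rsum_to_nonneg (floor_nat y) a Ha). unfold blk. lra. }
  pose proof (Rpower_pos y gam).
  assert (Rpower y gam * rsum blk a <= Rpower y gam * (B * Rpower (ln (x * 2 ^ S k)) kappa))
    by (apply Rmult_le_compat_l; lra).
  lra.
Qed.

Lemma dyadic_term_le kappa gam : 0 <= kappa -> gam < 0 -> exists C r, 0 <= C /\ 0 <= r < 1 /\
  forall x j, 2 <= x ->
    Rpower (x * 2 ^ j) gam * Rpower (ln (x * 2 ^ S j)) kappa <= C * r ^ j * log_power gam kappa x.
Proof.
  intros Hk Hg. set (lam := - gam * ln 2 / 2).
  assert (Hlam : 0 < lam) by (unfold lam; pose proof ln2_pos; nra).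
  destruct (Rpower_le_exp kappa lam Hk Hlam) as [C0 [HC0 HC0b]].
  set (r := exp (gam * ln 2 / 2)).
  exists (C0 * exp (- gam * ln 2)), r. split; [pose proof (exp_pos (- gam * ln 2)); nra|].
  split.
  { unfold r; split; [left; apply exp_pos|]. rewrite <- exp_0. apply exp_increasing.
    pose proof ln2_pos; nra. }
  intros x j Hx.
  pose proof ln2_pos as Hl2. pose proof (ln_le 2 x ltac:(lra) Hx) as Hlx.
  assert (H2j : 0 < 2 ^ j) by (apply pow_lt; lra).
  assert (Hln : ln (x * 2 ^ S j) <= (INR (S j) + 1) * ln x).
  { rewrite ln_mult, ln_pow by (try apply pow_lt; lra). pose proof (pos_INR (S j)). nra. }
  assert (Hb : Rpower (ln (x * 2 ^ S j)) kappa <= Rpower (INR (S j) + 1) kappa * Rpower (ln x) kappa).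
  { rewrite Rpower_mult_distr by (try (rewrite S_INR; pose proof (pos_INR j)); lra).
    apply Rle_Rpower_l; [lra|]. split; [|exact Hln].
    rewrite ln_mult, ln_pow by (try apply pow_lt; lra). pose proof (pos_INR (S j)). nra. }
  assert (Hcomb : Rpower (2 ^ j) gam * Rpower (INR (S j) + 1) kappa <= C0 * exp (- gam * ln 2) * r ^ j).
  { replace (Rpower (2 ^ j) gam) with (exp (INR j * (gam * ln 2)))
      by (unfold Rpower; f_equal; rewrite ln_pow by lra; ring).
    unfold r. rewrite <- exp_mul_INR.
    eapply Rle_trans.
    - apply Rmult_le_compat_l; [left; apply exp_pos|apply HC0b; pose proof (pos_INR (S j)); lra].
    - replace (exp (INR j * (gam * ln 2)) * (C0 * exp (lam * (INR (S j) + 1))))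
        with (C0 * (exp (INR j * (gam * ln 2)) * exp (lam * (INR (S j) + 1)))) by ring.
      rewrite <- exp_plus, Rmult_assoc, <- exp_plus.
      right. f_equal. f_equal. unfold lam. rewrite S_INR. field. }
  unfold log_power. rewrite <- Rpower_mult_distr by lra.
  pose proof (Rpower_pos x gam). pose proof (Rpower_pos (ln x) kappa).
  pose proof (Rpower_pos (2 ^ j) gam).
  apply Rle_trans with (Rpower x gam * (Rpower (2 ^ j) gam * (Rpower (INR (S j) + 1) kappa * Rpower (ln x) kappa))).
  - rewrite Rmult_assoc. apply Rmult_le_compat_l; [lra|]. apply Rmult_le_compat_l; lra.
  - replace (C0 * exp (- gam * ln 2) * r ^ j * (Rpower x gam * Rpower (ln x) kappa))
      with (Rpower x gam * ((C0 * exp (- gam * ln 2) * r ^ j) * Rpower (ln x) kappa)) by ring.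
    apply Rmult_le_compat_l; [lra|]. rewrite <- Rmult_assoc. apply Rmult_le_compat_r; lra.
Qed.

Lemma dyadic_tail_bound kappa gam : 0 <= kappa -> gam < 0 -> exists K, 0 <= K /\ tail_bound kappa gam K.
Proof.
  intros Hk Hg. destruct (dyadic_term_le kappa gam Hk Hg) as [C [r [HC [Hr HCr]]]].
  exists (C * / (1 - r)). split; [apply Rmult_le_pos; [lra|left; apply Rinv_0_lt_compat; lra]|].
  intros a B Ha HB Hab x Hx M HM.
  set (g := fun d => a d * Rpower (INR d) gam).
  assert (HMk : (M <= floor_nat (x * 2 ^ M))%nat).
  { apply floor_nat_le_iff; [pose proof (dyadic_point_ge2 x M Hx); lra|].
    pose proof (pow2_ge M). pose proof (pos_INR M). nra. }
  assert (Hg0 : forall d, 0 <= g d) by (intros; apply Rmult_le_pos; [apply Ha|left; apply Rpower_pos]).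
  pose proof (rsum_to_le_mono _ _ g Hg0 HMk).
  pose proof (dyadic_block_sum kappa gam a B x ltac:(lra) Ha Hab Hx M) as Hblocks. fold g in Hblocks.
  assert (Hterms : rsum (seq 0 M) (fun j => Rpower (x * 2 ^ j) gam * (B * Rpower (ln (x * 2 ^ S j)) kappa))
                   <= B * C * log_power gam kappa x * rsum (seq 0 M) (fun j => r ^ j)).
  { rewrite <- rsum_scal. apply rsum_le. intros j _.
    pose proof (HCr x j Hx). pose proof (Rpower_pos (x * 2 ^ j) gam).
    replace (B * C * log_power gam kappa x * r ^ j) with (B * (C * r ^ j * log_power gam kappa x)) by ring.
    replace (Rpower (x * 2 ^ j) gam * (B * Rpower (ln (x * 2 ^ S j)) kappa))
      with (B * (Rpower (x * 2 ^ j) gam * Rpower (ln (x * 2 ^ S j)) kappa)) by ring.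
    apply Rmult_le_compat_l; lra. }
  pose proof (geom_sum_le r M Hr).
  assert (0 <= B * C * log_power gam kappa x)
    by (apply Rmult_le_pos; [apply Rmult_le_pos; lra|apply log_power_nonneg]).
  assert (B * C * log_power gam kappa x * rsum (seq 0 M) (fun j => r ^ j)
          <= B * C * log_power gam kappa x * / (1 - r)) by (apply Rmult_le_compat_l; lra).
  fold g. replace (C * / (1 - r) * B * log_power gam kappa x) with (B * C * log_power gam kappa x * / (1 - r)) by ring.
  lra.
Qed.

Lemma Ccv_cauchy (u : nat -> Cx) :
  (forall eps, 0 < eps -> exists N0, forall N M, (N0 <= N)%nat -> (N <= M)%nat ->
     Cnorm (Csub (u M) (u N)) < eps) ->
  exists S, Ccv u S.
Proof.
  intros H.
  assert (Hcomp : forall proj : Cx -> R, (forall z, Rabs (proj z) <= Cnorm z) ->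
            (forall z w, proj (Csub z w) = proj z - proj w) -> Cauchy_crit (fun n => proj (u n))).
  { intros proj Hp Hsub eps Heps. destruct (H eps Heps) as [N0 HN0]. exists N0. intros n m Hn Hm.
    unfold Rdist. destruct (le_lt_dec n m) as [Hnm|Hnm].
    - pose proof (HN0 n m Hn Hnm). pose proof (Hp (Csub (u m) (u n))).
      rewrite Hsub in H1. rewrite Rabs_minus_sym. lra.
    - pose proof (HN0 m n Hm ltac:(lia)). pose proof (Hp (Csub (u n) (u m))).
      rewrite Hsub in H1. lra. }
  destruct (R_complete _ (Hcomp fst Cnorm_fst (fun _ _ => eq_refl))) as [lr Hlr].
  destruct (R_complete _ (Hcomp snd Cnorm_snd (fun _ _ => eq_refl))) as [li Hli].
  exists (lr, li). intros eps Heps.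
  destruct (Hlr (eps / 2) ltac:(lra)) as [N1 HN1]. destruct (Hli (eps / 2) ltac:(lra)) as [N2 HN2].
  exists (Nat.max N1 N2). intros n Hn.
  specialize (HN1 n ltac:(lia)). specialize (HN2 n ltac:(lia)). unfold Rdist in *.
  eapply Rle_lt_trans; [apply Cnorm_le_sum|]. simpl. lra.
Qed.

Lemma Ccv_dist_le (u : nat -> Cx) S N b : Ccv u S ->
  (forall M, (N <= M)%nat -> Cnorm (Csub (u M) (u N)) <= b) -> Cnorm (Csub (u N) S) <= b.
Proof.
  intros Hc Hb. apply Rle_plus_epsilon. intros eps Heps.
  destruct (Hc eps Heps) as [N1 HN1]. set (M := Nat.max N N1).
  specialize (HN1 M ltac:(lia)). specialize (Hb M ltac:(lia)).
  eapply Rle_trans; [apply (Cnorm_sub_triang _ (u M))|].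
  rewrite Cnorm_sub_sym. lra.
Qed.

Lemma Ccv_lin (u v : nat -> Cx) S T r s : Ccv u S -> Ccv v T ->
  Ccv (fun n => Cadd (Cscal r (u n)) (Cscal s (v n))) (Cadd (Cscal r S) (Cscal s T)).
Proof.
  intros Hu Hv eps Heps.
  set (e := eps / (2 * (Rabs r + Rabs s + 1))).
  pose proof (Rabs_pos r). pose proof (Rabs_pos s).
  assert (He : 0 < e) by (unfold e; apply Rdiv_lt_0_compat; lra).
  destruct (Hu e He) as [N1 HN1]. destruct (Hv e He) as [N2 HN2].
  exists (Nat.max N1 N2). intros n Hn.
  specialize (HN1 n ltac:(lia)). specialize (HN2 n ltac:(lia)).
  replace (Csub (Cadd (Cscal r (u n)) (Cscal s (v n))) (Cadd (Cscal r S) (Cscal s T)))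
    with (Cadd (Cscal r (Csub (u n) S)) (Cscal s (Csub (v n) T)))
    by (destruct (u n), (v n), S, T; Csplit; ring).
  eapply Rle_lt_trans; [apply Cnorm_triang|]. rewrite !Cnorm_scal.
  assert (Rabs r * Cnorm (Csub (u n) S) <= Rabs r * e) by (apply Rmult_le_compat_l; lra).
  assert (Rabs s * Cnorm (Csub (v n) T) <= Rabs s * e) by (apply Rmult_le_compat_l; lra).
  assert (Hee : e * (2 * (Rabs r + Rabs s + 1)) = eps) by (unfold e; field; lra).
  nra.
Qed.

Lemma dominated_series_tail kappa gam K B (a : nat -> R) (u : nat -> Cx) :
  0 <= kappa -> gam < 0 -> 0 <= K -> 0 <= B -> tail_bound kappa gam K ->
  (forall d, 0 <= a d) -> log_power_bounded kappa B a ->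
  (forall d, (1 <= d)%nat -> Cnorm (u d) <= a d * Rpower (INR d) gam) ->
  exists S, Ccv (fun N => csum_to N u) S /\
    forall x, 2 <= x -> Cnorm (Csub (csum_to (floor_nat x) u) S) <= K * B * log_power gam kappa x.
Proof.
  intros Hk Hg HK HB Ht Ha Hab Hu.
  assert (Hd : forall x, 2 <= x -> forall M, (floor_nat x <= M)%nat ->
     Cnorm (Csub (csum_to M u) (csum_to (floor_nat x) u)) <= K * B * log_power gam kappa x).
  { intros x Hx M HM. eapply Rle_trans.
    - apply (csum_to_diff_le u (fun d => a d * Rpower (INR d) gam)); [exact HM|].
      intros d Hd; apply Hu; lia.
    - apply Ht; assumption. }
  destruct (Ccv_cauchy (fun N => csum_to N u)) as [S HS].
  { intros eps Heps. destruct (log_power_decay gam kappa (K * B) Hg Hk ltac:(nra) eps Heps) as [N0 [HN0 HN0b]].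
    exists N0. intros N M HN HM.
    assert (Hx : 2 <= INR N) by (replace 2 with (INR 2) by (simpl; lra); apply le_INR; lia).
    pose proof (Hd (INR N) Hx M) as H. rewrite floor_nat_INR in H.
    eapply Rle_lt_trans; [apply H; exact HM|]. apply HN0b. apply le_INR; lia. }
  exists S. split; [exact HS|]. intros x Hx.
  apply (Ccv_dist_le (fun N => csum_to N u) S (floor_nat x)); [exact HS|]. intros M HM. apply Hd; assumption.
Qed.

Lemma M_neq beta y : beta <> -1 -> M beta y = Rpower y (beta + 1) / (beta + 1).
Proof. intros H. unfold M. destruct (Req_EM_T beta (-1)); [contradiction|reflexivity]. Qed.

Lemma M_eq beta y : beta = -1 -> M beta y = ln y.
Proof. intros H. unfold M. destruct (Req_EM_T beta (-1)); [reflexivity|contradiction]. Qed.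

Lemma M_derivable beta t : 0 < t -> derivable_pt_lim (M beta) t (Rpower t beta).
Proof.
  intros Ht. unfold M. destruct (Req_EM_T beta (-1)) as [->|E].
  - rewrite <- Rinv_Rpower by exact Ht. apply derivable_pt_lim_ln; exact Ht.
  - assert (Hb : beta + 1 <> 0) by lra.
    replace (fun x => Rpower x (beta + 1) / (beta + 1)) with
      (mult_real_fct (/ (beta + 1)) (fun x => Rpower x (beta + 1)))
      by (apply functional_extensionality; intros x; unfold mult_real_fct; field; exact Hb).
    replace (Rpower t beta) with (/ (beta + 1) * ((beta + 1) * Rpower t (beta + 1 - 1)))
      by (replace (beta + 1 - 1) with beta by ring; field; exact Hb).
    apply derivable_pt_lim_scal. apply derivable_pt_lim_power; exact Ht.
Qed.

Lemma M_increment_bounds beta a b : 0 < a -> a <= b ->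
  (0 <= beta -> (b - a) * Rpower a beta <= M beta b - M beta a <= (b - a) * Rpower b beta) /\
  (beta <= 0 -> (b - a) * Rpower b beta <= M beta b - M beta a <= (b - a) * Rpower a beta).
Proof.
  intros Ha [Hab|<-]; [|split; intros; rewrite !Rminus_diag, !Rmult_0_l; lra].
  destruct (MVT_cor2 (M beta) (fun t => Rpower t beta) a b Hab) as [c [-> Hc]].
  { intros c Hc. apply M_derivable. lra. }
  split; intros Hb.
  - assert (Rpower a beta <= Rpower c beta) by (apply Rle_Rpower_l; lra).
    assert (Rpower c beta <= Rpower b beta) by (apply Rle_Rpower_l; lra). nra.
  - assert (Rpower c beta <= Rpower a beta) by (apply Rpower_le_base_neg; lra).
    assert (Rpower b beta <= Rpower c beta) by (apply Rpower_le_base_neg; lra). nra.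
Qed.

Definition power_sum (beta : R) (N : nat) : R := rsum_to N (fun m => Rpower (INR m) beta).

Definition power_sum_error (beta : R) (k : nat) : R := power_sum beta k - M beta (INR k).

Lemma power_sum_error_step beta n : (1 <= n)%nat ->
  let E := power_sum_error beta in
  (0 <= beta -> 0 <= E (S n) - E n <= Rpower (INR (S n)) beta - Rpower (INR n) beta) /\
  (beta <= 0 -> Rpower (INR (S n)) beta - Rpower (INR n) beta <= E (S n) - E n <= 0).
Proof.
  intros Hn E. unfold E, power_sum_error, power_sum. rewrite rsum_to_S.
  destruct (M_increment_bounds beta (INR n) (INR (S n)) (lt_0_INR n Hn) ltac:(apply le_INR; lia))
    as [Hpos Hneg].
  replace (INR (S n) - INR n) with 1 in Hpos, Hneg by (rewrite S_INR; ring).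
  split; intros Hb; [specialize (Hpos Hb)|specialize (Hneg Hb)]; lra.
Qed.

Lemma lim_le (u : nat -> R) l k B : Un_cv u l -> (forall m, (m >= k)%nat -> u m <= B) -> l <= B.
Proof.
  intros Hu Hb. destruct (Rle_dec l B) as [|Hn]; [assumption|]. exfalso.
  destruct (Hu (l - B) ltac:(lra)) as [N HN]. specialize (HN (Nat.max N k) ltac:(lia)).
  specialize (Hb (Nat.max N k) ltac:(lia)). unfold Rdist in HN. apply Rabs_def2 in HN. lra.
Qed.

Lemma lim_ge (u : nat -> R) l k B : Un_cv u l -> (forall m, (m >= k)%nat -> B <= u m) -> B <= l.
Proof.
  intros Hu Hb. destruct (Rle_dec B l) as [|Hn]; [assumption|]. exfalso.
  destruct (Hu (B - l) ltac:(lra)) as [N HN]. specialize (HN (Nat.max N k) ltac:(lia)).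
  specialize (Hb (Nat.max N k) ltac:(lia)). unfold Rdist in HN. apply Rabs_def2 in HN. lra.
Qed.

(* For [beta < 0] the error is decreasing and its limit is the constant. *)
Lemma power_sum_error_integers beta : exists c, forall n, (1 <= n)%nat ->
  c <= power_sum_error beta n <= c + Rpower (INR n) beta.
Proof.
  set (E := power_sum_error beta).
  assert (Htele : forall n m, (1 <= n <= m)%nat ->
    (0 <= beta -> 0 <= E m - E n <= Rpower (INR m) beta - Rpower (INR n) beta) /\
    (beta <= 0 -> Rpower (INR m) beta - Rpower (INR n) beta <= E m - E n <= 0)).
  { intros n m [Hn Hnm]. induction Hnm as [|m Hnm IH]; [split; intros; lra|].
    destruct (power_sum_error_step beta m ltac:(lia)) as [Hp Hq]. fold E in Hp, Hq.
    destruct IH as [IHp IHq]. split; intros Hb; [specialize (Hp Hb); specialize (IHp Hb)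
      |specialize (Hq Hb); specialize (IHq Hb)]; lra. }
  destruct (Rle_lt_dec 0 beta) as [Hb|Hb].
  - exists (E 1%nat). intros n Hn. destruct (proj1 (Htele 1%nat n ltac:(lia)) Hb) as [H1 H2].
    simpl INR in H2. rewrite Rpower_1_base in H2. lra.
  - set (u := fun k => E (S k)).
    assert (Hdec : Un_decreasing u).
    { intros k. unfold u. pose proof (proj2 (Htele (S k) (S (S k)) ltac:(lia)) ltac:(lra)). lra. }
    assert (Hlb : has_lb u).
    { exists (- (E 1%nat - 1)). intros z [k ->]. unfold opp_seq, u.
      pose proof (proj2 (Htele 1%nat (S k) ltac:(lia)) ltac:(lra)).
      simpl INR at 2 in H. rewrite Rpower_1_base in H. pose proof (Rpower_pos (INR (S k)) beta). lra. }
    destruct (decreasing_cv u Hdec Hlb) as [c Hc].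
    exists c. intros n Hn. replace n with (S (n - 1)) by lia. split.
    + apply (lim_le u c (n - 1)); [exact Hc|]. intros m Hm.
      pose proof (proj2 (Htele (S (n - 1)) (S m) ltac:(lia)) ltac:(lra)). unfold u. lra.
    + cut (E (S (n - 1)) - Rpower (INR (S (n - 1))) beta <= c); [lra|].
      apply (lim_ge u c (n - 1)); [exact Hc|]. intros m Hm.
      pose proof (proj2 (Htele (S (n - 1)) (S m) ltac:(lia)) ltac:(lra)).
      pose proof (Rpower_pos (INR (S m)) beta). unfold u. lra.
Qed.

Lemma Rpower_floor_le beta y : 1 <= y ->
  Rpower (INR (floor_nat y)) beta <= Rpower 2 (Rabs beta) * Rpower y beta.
Proof.
  intros Hy. pose proof (floor_nat_spec y ltac:(lra)) as [Hn1 Hn2].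
  assert (Hn : (1 <= floor_nat y)%nat) by (apply floor_nat_le_iff; simpl; lra).
  pose proof (lt_0_INR _ Hn) as Hn0. pose proof (le_INR _ _ Hn) as Hn1'. simpl INR in Hn1'.
  pose proof (Rpower_pos y beta).
  destruct (Rle_lt_dec 0 beta) as [Hb|Hb].
  - rewrite Rabs_right by lra.
    assert (1 <= Rpower 2 beta) by (rewrite <- (Rpower_O 2) by lra; apply Rle_Rpower; lra).
    assert (Rpower (INR (floor_nat y)) beta <= Rpower y beta) by (apply Rle_Rpower_l; lra). nra.
  - rewrite Rabs_left by lra. replace (Rpower 2 (- beta) * Rpower y beta) with (Rpower (y / 2) beta)
      by (rewrite Rpower_div by lra; ring).
    apply Rpower_le_base_neg; lra.
Qed.

Definition power_sum_remainder (beta c y : R) : R := power_sum beta (floor_nat y) - M beta y - c.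

Lemma power_sum_asymptotic beta : exists c Kb, 0 <= Kb /\ forall y, 1 <= y ->
  Rabs (power_sum_remainder beta c y) <= Kb * Rpower y beta.
Proof.
  destruct (power_sum_error_integers beta) as [c Hc].
  exists c, (2 * Rpower 2 (Rabs beta)). split; [pose proof (Rpower_pos 2 (Rabs beta)); lra|].
  intros y Hy. set (n := floor_nat y).
  pose proof (floor_nat_spec y ltac:(lra)) as Hfl. fold n in Hfl.
  assert (Hn : (1 <= n)%nat) by (apply floor_nat_le_iff; simpl; lra).
  specialize (Hc n Hn). unfold power_sum_error in Hc. pose proof (Rpower_floor_le beta y Hy) as Hny. fold n in Hny.
  assert (Hyb : Rpower y beta <= Rpower 2 (Rabs beta) * Rpower y beta).
  { pose proof (Rpower_pos y beta).
    assert (1 <= Rpower 2 (Rabs beta)) by (rewrite <- (Rpower_O 2) by lra; apply Rle_Rpower; [lra|apply Rabs_pos]).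
    nra. }
  destruct (M_increment_bounds beta (INR n) y (lt_0_INR n Hn) (proj1 Hfl)) as [Hpos Hneg].
  pose proof (Rpower_pos (INR n) beta). pose proof (Rpower_pos y beta).
  assert (HM : 0 <= M beta y - M beta (INR n) <= Rpower 2 (Rabs beta) * Rpower y beta).
  { destruct (Rle_lt_dec 0 beta) as [Hb|Hb]; [specialize (Hpos Hb)|specialize (Hneg ltac:(lra))];
      split; nra. }
  unfold power_sum_remainder. fold n. apply Rabs_le. lra.
Qed.

Lemma div_succ N d : (1 <= d)%nat ->
  if (S N mod d =? 0)%nat then (S N / d = S (N / d))%nat else (S N / d = N / d)%nat.
Proof.
  intros Hd. pose proof (Nat.div_mod N d ltac:(lia)) as HN.
  pose proof (Nat.mod_upper_bound N d ltac:(lia)) as Hr.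
  set (q := (N / d)%nat) in *. set (r := (N mod d)%nat) in *.
  destruct (Nat.eq_dec (S r) d) as [E|E].
  - replace (S N mod d)%nat with 0%nat by (apply (Nat.mod_unique (S N) d (S q) 0); lia).
    symmetry. apply (Nat.div_unique (S N) d (S q) 0); lia.
  - replace (S N mod d)%nat with (S r) by (apply (Nat.mod_unique (S N) d q (S r)); lia).
    symmetry. apply (Nat.div_unique (S N) d q (S r)); lia.
Qed.

Lemma rsum_to_divisor_swap (F : nat -> nat -> R) N :
  rsum_to N (fun n => rsum (seq 1 n) (fun d => if divb d n then F d (n / d)%nat else 0))
  = rsum_to N (fun d => rsum_to (N / d) (F d)).
Proof.
  induction N as [|N IH]; [reflexivity|].
  rewrite rsum_to_S, IH.
  replace (rsum_to N (fun d => rsum_to (N / d) (F d)))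
    with (rsum_to (S N) (fun d => rsum_to (N / d) (F d)))
    by (rewrite rsum_to_S, (Nat.div_small N (S N)), rsum_to_0 by lia; ring).
  unfold rsum_to at 1 2. rewrite <- rsum_plus. apply rsum_ext. intros d Hd. apply in_seq in Hd.
  pose proof (div_succ N d ltac:(lia)) as Hdiv. unfold divb.
  destruct (S N mod d =? 0)%nat; rewrite Hdiv; [rewrite rsum_to_S|]; unfold rsum_to; ring.
Qed.

Lemma csum_to_phi_theta_swap (theta : nat -> Cx) beta N :
  csum_to N (fun n => Cscal (Rpower (INR n) beta) (phi_theta theta n))
  = csum_to N (fun d => Cscal (Rpower (INR d) beta * power_sum beta (N / d)) (theta d)).
Proof.
  assert (Hreal : forall h : nat -> R,
    rsum_to N (fun n => Rpower (INR n) beta * rsum (seq 1 n) (fun d => if divb d n then h d else 0))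
    = rsum_to N (fun d => Rpower (INR d) beta * power_sum beta (N / d) * h d)).
  { intros h.
    transitivity (rsum_to N (fun n => rsum (seq 1 n) (fun d => if divb d n then
        h d * Rpower (INR d) beta * Rpower (INR (n / d)) beta else 0))).
    - unfold rsum_to. apply rsum_ext. intros n Hn. apply in_seq in Hn.
      rewrite <- rsum_scal. apply rsum_ext. intros d Hd. apply in_seq in Hd.
      unfold divb. destruct (Nat.eqb_spec (n mod d) 0) as [E|E]; [|ring].
      pose proof (Nat.div_mod n d ltac:(lia)) as Hnd. rewrite E, Nat.add_0_r in Hnd.
      assert (Hq : (1 <= n / d)%nat) by (destruct (n / d)%nat; lia).
      rewrite Hnd at 1. rewrite mult_INR, <- Rpower_mult_distr by (apply lt_0_INR; lia). ring.
    - rewrite (rsum_to_divisor_swap (fun d m => h d * Rpower (INR d) beta * Rpower (INR m) beta)).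
      unfold rsum_to. apply rsum_ext. intros d _. unfold power_sum, rsum_to. rewrite rsum_scal. ring. }
  assert (Hphi : forall n (pr : Cx -> R), (forall z w, pr (Cadd z w) = pr z + pr w) -> pr Czero = 0 ->
    pr (phi_theta theta n) = rsum (seq 1 n) (fun d => if divb d n then pr (theta d) else 0)).
  { intros n pr Hadd H0. unfold phi_theta, rsum.
    induction (seq 1 n) as [|d l IH]; [exact H0|]. simpl. rewrite Hadd, IH.
    destruct (divb d n); [reflexivity|rewrite H0; reflexivity]. }
  unfold csum_to. Csplit.
  - pose proof (Hreal (fun d => fst (theta d))) as H. unfold rsum_to in H. rewrite <- H.
    apply rsum_ext. intros n _. rewrite (Hphi n fst); reflexivity.
  - pose proof (Hreal (fun d => snd (theta d))) as H. unfold rsum_to in H. rewrite <- H.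
    apply rsum_ext. intros n _. rewrite (Hphi n snd); reflexivity.
Qed.

Definition weight (sigma : R) (theta : nat -> Cx) (d : nat) : R := Cnorm (theta d) * Rpower (INR d) (- sigma).

Definition recip (theta : nat -> Cx) (d : nat) : Cx := Cscal (/ INR d) (theta d).

Lemma weight_nonneg sigma theta d : 0 <= weight sigma theta d.
Proof. apply Rmult_le_pos; [apply Cnorm_nonneg|left; apply Rpower_pos]. Qed.

Lemma Cnorm_weight sigma theta d : (1 <= d)%nat ->
  Cnorm (theta d) = weight sigma theta d * Rpower (INR d) sigma.
Proof.
  intros Hd. unfold weight. rewrite Rmult_assoc, <- Rpower_plus.
  replace (- sigma + sigma) with 0 by ring. rewrite Rpower_O by (apply lt_0_INR; exact Hd). ring.
Qed.

Lemma Cnorm_scal_weight sigma theta c d : (1 <= d)%nat -> 0 <= c ->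
  Cnorm (Cscal c (theta d)) = c * weight sigma theta d * Rpower (INR d) sigma.
Proof. intros Hd Hc. rewrite Cnorm_scal, (Cnorm_weight sigma theta d Hd), Rabs_right by lra. ring. Qed.

Lemma Cnorm_recip sigma theta d : (1 <= d)%nat ->
  Cnorm (recip theta d) = weight sigma theta d * Rpower (INR d) (sigma - 1).
Proof.
  intros Hd. pose proof (lt_0_INR d Hd). unfold recip.
  rewrite (Cnorm_scal_weight sigma) by (exact Hd || (left; apply Rinv_0_lt_compat; exact H)).
  rewrite Rinv_Rpower by lra. replace (sigma - 1) with (-1 + sigma) by ring. rewrite Rpower_plus. ring.
Qed.

Lemma theta_off_smooth_sqfree theta N d : multiplicative_sqfree theta -> (1 <= d <= N)%nat ->
  ~ In d (smooth_sqfree N) -> theta d = Czero.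
Proof.
  intros [_ [_ Hz]] Hd Hn. apply Hz; [lia|]. intros Hsq. apply Hn.
  apply in_smooth_sqfree; [lia|exact Hsq|]. intros q Hq Hqd.
  assert (q <= d)%nat by (apply Nat.divide_pos_le; [lia|exact Hqd]). lia.
Qed.

Lemma rsum_to_smooth_sqfree (f : nat -> R) N :
  (forall d, (1 <= d <= N)%nat -> ~ In d (smooth_sqfree N) -> f d = 0) ->
  rsum_to N f = rsum (filter (fun d => (d <=? N)%nat) (smooth_sqfree N)) f.
Proof.
  intros Hz. apply rsum_incl_eq.
  - apply NoDup_filter, NoDup_smooth_sqfree.
  - apply seq_NoDup.
  - intros d Hd. apply filter_In in Hd. destruct Hd as [Hd Hle]. apply Nat.leb_le in Hle.
    destruct (smooth_sqfree_spec N d Hd). apply in_seq. lia.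
  - intros d Hd Hn. apply in_seq in Hd. apply Hz; [lia|]. intros Hin. apply Hn.
    apply filter_In. split; [exact Hin|]. apply Nat.leb_le. lia.
Qed.

(* The weights are multiplicative, so their partial sums are dominated by
   [prod_(p <= t) (1 + w p) <= exp (sum_(p <= t) w p)]. *)
Lemma weight_log_power_bounded theta sigma kappa A :
  multiplicative_sqfree theta -> Condition1 theta sigma kappa A ->
  log_power_bounded kappa (exp A) (weight sigma theta).
Proof.
  intros Hm Hc t Ht. set (N := floor_nat t).
  rewrite (rsum_to_smooth_sqfree _ N).
  2:{ intros d Hd Hn. unfold weight. rewrite (theta_off_smooth_sqfree theta N d Hm Hd Hn), Cnorm_Czero. ring. }
  apply Rle_trans with (rsum (smooth_sqfree N) (weight sigma theta)).
  { rewrite (rsum_filter (fun d => (d <=? N)%nat) (smooth_sqfree N)).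
    pose proof (rsum_nonneg (filter (fun x => negb (x <=? N)%nat) (smooth_sqfree N)) (weight sigma theta)
      (fun d _ => weight_nonneg sigma theta d)). lra. }
  destruct Hm as [H1 [Hmul _]].
  eapply Rle_trans; [apply rsum_smooth_sqfree_le_exp|].
  - unfold weight. rewrite H1, Cnorm_Cone. simpl INR. rewrite Rpower_1_base. ring.
  - intros; apply weight_nonneg.
  - intros x y Hx Hy Hg. unfold weight. rewrite Hmul, Cnorm_mul by assumption.
    rewrite mult_INR, <- Rpower_mult_distr by (apply lt_0_INR; lia). ring.
  - specialize (Hc t Ht). unfold sumR_primes_le in Hc. rewrite sumR_le_eq in Hc by lra.
    replace (exp A * Rpower (ln t) kappa) with (exp (kappa * ln (ln t) + A))
      by (unfold Rpower; rewrite exp_plus; ring).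
    apply exp_le. exact Hc.
Qed.

Lemma recip_cmultiplicative theta : multiplicative_sqfree theta -> cmultiplicative (recip theta).
Proof.
  intros [H1 [Hm _]]. split.
  - unfold recip. rewrite H1. simpl INR. rewrite Rinv_1. Csplit; ring.
  - intros a b Ha Hb Hg. unfold recip. rewrite Hm, mult_INR by assumption.
    pose proof (lt_0_INR a Ha). pose proof (lt_0_INR b Hb).
    rewrite Rinv_mult. destruct (theta a), (theta b). Csplit; field; lra.
Qed.

Lemma euler_partial_product_eq theta N : multiplicative_sqfree theta ->
  prodC_primes_le (INR N) (fun p => Cadd Cone (Cscal (/ INR p) (theta p)))
  = Cadd (csum_to N (recip theta)) (csum (filter (fun d => negb (d <=? N)%nat) (smooth_sqfree N)) (recip theta)).
Proof.
  intros Hm. rewrite prodC_primes_le_eq.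
  transitivity (csum (smooth_sqfree N) (recip theta)).
  { rewrite (csum_smooth_sqfree_euler (recip theta) N (recip_cmultiplicative theta Hm)). reflexivity. }
  assert (Hz : forall pr : Cx -> R, pr Czero = 0 -> forall d, (1 <= d <= N)%nat ->
      ~ In d (smooth_sqfree N) -> pr (recip theta d) = 0).
  { intros pr H0 d Hd Hn. unfold recip. rewrite (theta_off_smooth_sqfree theta N d Hm Hd Hn).
    replace (Cscal (/ INR d) Czero) with Czero by (Csplit; ring). exact H0. }
  unfold csum_to. Csplit; rewrite (rsum_filter (fun d => (d <=? N)%nat)); f_equal; symmetry;
    [apply (rsum_to_smooth_sqfree (fun n => fst (recip theta n)))
    |apply (rsum_to_smooth_sqfree (fun n => snd (recip theta n)))]; apply Hz; reflexivity.
Qed.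

Lemma euler_product_excess_le theta N : exists Mx, (N <= Mx)%nat /\
  Cnorm (csum (filter (fun d => negb (d <=? N)%nat) (smooth_sqfree N)) (recip theta))
  <= rsum_to Mx (fun d => Cnorm (recip theta d)) - rsum_to N (fun d => Cnorm (recip theta d)).
Proof.
  destruct (list_bound (smooth_sqfree N)) as [Mx HMx]. exists (Nat.max N Mx). split; [lia|].
  eapply Rle_trans; [apply Cnorm_csum|].
  rewrite (rsum_to_split N (Nat.max N Mx)) by lia.
  match goal with |- _ <= ?a + ?b - ?c => replace (a + b - c) with b by ring end.
  apply rsum_incl_le.
  - apply NoDup_filter, NoDup_smooth_sqfree.
  - intros d Hd. apply filter_In in Hd. destruct Hd as [Hd Hgt].
    apply Bool.negb_true_iff, Nat.leb_gt in Hgt. specialize (HMx d Hd). apply in_seq. lia.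
  - intros; apply Cnorm_nonneg.
Qed.

Section EulerProduct.

Variables (sigma kappa K1 B : R) (theta : nat -> Cx).
Hypotheses (Hsigma1 : sigma < 1) (Hkappa : 0 <= kappa) (HK1 : 0 <= K1) (HB : 0 <= B)
  (HT1 : tail_bound kappa (sigma - 1) K1) (Hw : log_power_bounded kappa B (weight sigma theta)).

Lemma recip_tail_le x M : 2 <= x -> (floor_nat x <= M)%nat ->
  rsum_to M (fun d => Cnorm (recip theta d)) - rsum_to (floor_nat x) (fun d => Cnorm (recip theta d))
  <= K1 * B * log_power (sigma - 1) kappa x.
Proof.
  intros Hx HM. eapply Rle_trans; [|apply (HT1 _ B (weight_nonneg sigma theta) HB Hw x Hx M HM)].
  apply rsum_to_diff_le; [exact HM|]. intros d Hd. rewrite (Cnorm_recip sigma) by lia. lra.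
Qed.

Lemma recip_series_converges : exists S, Ccv (fun N => csum_to N (recip theta)) S.
Proof.
  destruct (dominated_series_tail kappa (sigma - 1) K1 B (weight sigma theta) (recip theta))
    as [S [HS _]]; try assumption; [lra|apply weight_nonneg| |exists S; exact HS].
  intros d Hd. rewrite (Cnorm_recip sigma) by exact Hd. lra.
Qed.

Lemma recip_limit_dist S x : Ccv (fun N => csum_to N (recip theta)) S -> 2 <= x ->
  Cnorm (Csub (csum_to (floor_nat x) (recip theta)) S) <= K1 * B * log_power (sigma - 1) kappa x.
Proof.
  intros HS Hx. apply (Ccv_dist_le (fun N => csum_to N (recip theta))); [exact HS|].
  intros M HM. eapply Rle_trans; [|apply (recip_tail_le x M Hx HM)].
  apply csum_to_diff_le; [exact HM|]. intros; lra.
Qed.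

Lemma euler_product_converges S : multiplicative_sqfree theta ->
  Ccv (fun N => csum_to N (recip theta)) S ->
  Ccv (fun N => prodC_primes_le (INR N) (fun p => Cadd Cone (Cscal (/ INR p) (theta p)))) S.
Proof.
  intros Hm HS eps Heps.
  destruct (log_power_decay (sigma - 1) kappa (K1 * B) ltac:(lra) Hkappa ltac:(nra) (eps / 2) ltac:(lra))
    as [N0 [HN0 HN0b]].
  destruct (HS (eps / 2) ltac:(lra)) as [N1 HN1].
  exists (Nat.max N0 N1). intros N HN.
  assert (Hx : 2 <= INR N) by (replace 2 with (INR 2) by (simpl; lra); apply le_INR; lia).
  rewrite (euler_partial_product_eq theta N Hm).
  destruct (euler_product_excess_le theta N) as [Mx [HMx HMxb]].
  pose proof (recip_tail_le (INR N) Mx Hx) as Htail. rewrite floor_nat_INR in Htail.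
  specialize (HN0b (INR N) ltac:(apply le_INR; lia)). specialize (HN1 N ltac:(lia)).
  set (excess := csum (filter (fun d => negb (d <=? N)%nat) (smooth_sqfree N)) (recip theta)) in *.
  replace (Csub (Cadd (csum_to N (recip theta)) excess) S) with (Cadd excess (Csub (csum_to N (recip theta)) S))
    by (destruct excess, (csum_to N (recip theta)), S; Csplit; ring).
  eapply Rle_lt_trans; [apply Cnorm_triang|].
  specialize (Htail HMx). lra.
Qed.

Lemma prime_reciprocal_series_converges : exists L,
  Un_cv (fun N => sumR_primes_le (INR N) (fun p => Cnorm (theta p) / INR p)) L.
Proof.
  set (g := fun d => Cnorm (recip theta d)).
  set (v := fun N => sumR_primes_le (INR N) (fun p => Cnorm (theta p) / INR p)).
  assert (Hv : forall N, v N = rsum_to N (fun p => if primeb p then Cnorm (theta p) / INR p else 0)).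
  { intros N. unfold v, sumR_primes_le. rewrite sumR_le_eq, floor_nat_INR by apply pos_INR. reflexivity. }
  assert (Hvg : forall N, v N <= rsum_to N g).
  { intros N. rewrite Hv. apply rsum_le. intros d Hd. apply in_seq in Hd.
    unfold g, recip. rewrite Cnorm_scal, Rabs_right by (left; apply Rinv_0_lt_compat, lt_0_INR; lia).
    pose proof (Cnorm_nonneg (theta d)). pose proof (lt_0_INR d ltac:(lia)).
    pose proof (Rinv_0_lt_compat _ H0).
    destruct (primeb d); [right; unfold Rdiv; ring|nra]. }
  assert (Hg0 : forall d, 0 <= g d) by (intros; apply Cnorm_nonneg).
  assert (Hgrow : Un_growing v).
  { intros N. rewrite !Hv, rsum_to_S.
    destruct (primeb (S N)); [|lra].
    pose proof (Cnorm_nonneg (theta (S N))). pose proof (lt_0_INR (S N) ltac:(lia)).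
    assert (0 <= Cnorm (theta (S N)) / INR (S N))
      by (apply Rmult_le_pos; [lra|left; apply Rinv_0_lt_compat; lra]).
    lra. }
  assert (Hub : has_ub v).
  { exists (rsum_to 2 g + K1 * B * log_power (sigma - 1) kappa 2).
    intros z [N ->]. eapply Rle_trans; [apply Hvg|].
    pose proof (log_power_nonneg (sigma - 1) kappa 2).
    assert (0 <= K1 * B * log_power (sigma - 1) kappa 2) by (apply Rmult_le_pos; [nra|lra]).
    destruct (le_lt_dec 2 N) as [HN|HN].
    - pose proof (recip_tail_le 2 N ltac:(lra)) as H2.
      replace (floor_nat 2) with 2%nat in H2 by (symmetry; apply (floor_nat_INR 2)).
      specialize (H2 HN). fold g in H2. lra.
    - pose proof (rsum_to_le_mono N 2 g Hg0 ltac:(lia)). lra. }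
  destruct (growing_cv v Hgrow Hub) as [L HL]. exists L. exact HL.
Qed.

End EulerProduct.

Lemma M_scaling_power beta x d : beta <> -1 -> 0 < x -> 0 < d ->
  Rpower d beta * M beta (x / d) = M beta x / d.
Proof.
  intros Hb Hx Hd. rewrite !M_neq, Rpower_div by assumption.
  replace (Rpower d beta * (Rpower x (beta + 1) * Rpower d (- (beta + 1)) / (beta + 1)))
    with (Rpower x (beta + 1) / (beta + 1) * (Rpower d beta * Rpower d (- (beta + 1))))
    by (unfold Rdiv; ring).
  rewrite <- Rpower_plus. replace (beta + - (beta + 1)) with (-1) by ring.
  rewrite <- Rinv_Rpower by exact Hd. reflexivity.
Qed.

Lemma M_scaling_log beta x d : beta = -1 -> 0 < x -> 0 < d ->
  Rpower d beta * M beta (x / d) = (ln x - ln d) / d.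
Proof.
  intros -> Hx Hd. rewrite M_eq, <- Rinv_Rpower by (reflexivity || assumption).
  unfold Rdiv. rewrite ln_mult, ln_Rinv by (try apply Rinv_0_lt_compat; assumption). ring.
Qed.

(* Exchanging the order of summation and writing the inner power sum as [M + c + remainder]. *)
Lemma phi_sum_split theta beta c x : 0 <= x ->
  sumC_le x (fun n => Cscal (Rpower (INR n) beta) (phi_theta theta n)) =
  Cadd (csum_to (floor_nat x) (fun d => Cscal (Rpower (INR d) beta * M beta (x / INR d)) (theta d)))
    (Cadd (Cscal c (csum_to (floor_nat x) (fun d => Cscal (Rpower (INR d) beta) (theta d))))
      (csum_to (floor_nat x)
         (fun d => Cscal (Rpower (INR d) beta * power_sum_remainder beta c (x / INR d)) (theta d)))).
Proof.
  intros Hx. rewrite sumC_le_eq, csum_to_phi_theta_swap by exact Hx.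
  unfold csum_to. Csplit; rewrite <- rsum_scal, <- !rsum_plus; apply rsum_ext; intros d Hd;
    apply in_seq in Hd; unfold power_sum_remainder; rewrite floor_nat_div by (lra || lia); ring.
Qed.

Lemma Cnorm_three_terms_le (P1 Qn P3 A C1 Q : Cx) c a b e :
  Cnorm (Csub P1 (Cadd A C1)) <= a -> Cnorm (Csub Qn Q) <= b -> Cnorm P3 <= e ->
  Cnorm (Csub (Cadd P1 (Cadd (Cscal c Qn) P3)) (Cadd A (Cadd C1 (Cscal c Q)))) <= a + Rabs c * b + e.
Proof.
  intros Ha Hb He.
  replace (Csub (Cadd P1 (Cadd (Cscal c Qn) P3)) (Cadd A (Cadd C1 (Cscal c Q))))
    with (Cadd (Csub P1 (Cadd A C1)) (Cadd (Cscal c (Csub Qn Q)) P3))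
    by (destruct P1, Qn, P3, A, C1, Q; Csplit; ring).
  eapply Rle_trans; [apply Cnorm_triang|].
  eapply Rle_trans; [apply Rplus_le_compat_l, Cnorm_triang|].
  rewrite Cnorm_scal. pose proof (Rabs_pos c).
  assert (Rabs c * Cnorm (Csub Qn Q) <= Rabs c * b) by (apply Rmult_le_compat_l; lra). lra.
Qed.

Section PhiSumAsymptotic.

Variables (sigma kappa beta B : R) (theta : nat -> Cx).
Hypotheses (Hsigma0 : 0 <= sigma) (Hsigma1 : sigma < 1) (Hkappa : 0 <= kappa) (HB : 0 <= B)
  (Hw : log_power_bounded kappa B (weight sigma theta)).

Lemma weight_sum_le x gam : 2 <= x -> 0 <= gam ->
  rsum_to (floor_nat x) (fun d => weight sigma theta d * Rpower (INR d) gam)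
  <= B * log_power gam kappa x.
Proof.
  intros Hx Hg. pose proof (floor_nat_spec x ltac:(lra)) as Hfl.
  apply Rle_trans with (rsum_to (floor_nat x) (fun d => Rpower x gam * weight sigma theta d)).
  - apply rsum_le. intros d Hd. apply in_seq in Hd. rewrite Rmult_comm.
    apply Rmult_le_compat_r; [apply weight_nonneg|]. apply Rle_Rpower_l; [exact Hg|].
    split; [apply lt_0_INR; lia|]. pose proof (le_INR d (floor_nat x) ltac:(lia)). lra.
  - pose proof (Hw x Hx). pose proof (Rpower_pos x gam).
    unfold rsum_to in *. rewrite rsum_scal.
    unfold log_power. replace (B * (Rpower x gam * Rpower (ln x) kappa))
      with (Rpower x gam * (B * Rpower (ln x) kappa)) by ring.
    apply Rmult_le_compat_l; lra.
Qed.

Lemma remainder_contribution_le Kb c x : 0 <= Kb ->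
  (forall y, 1 <= y -> Rabs (power_sum_remainder beta c y) <= Kb * Rpower y beta) -> 2 <= x ->
  Cnorm (csum_to (floor_nat x)
    (fun d => Cscal (Rpower (INR d) beta * power_sum_remainder beta c (x / INR d)) (theta d)))
  <= Kb * B * log_power (sigma + beta) kappa x.
Proof.
  intros HKb Hrem Hx. eapply Rle_trans; [apply Cnorm_csum|].
  apply Rle_trans with
    (rsum_to (floor_nat x) (fun d => Kb * Rpower x beta * (weight sigma theta d * Rpower (INR d) sigma))).
  - apply rsum_le. intros d Hd. apply in_seq in Hd. assert (Hd1 : (1 <= d)%nat) by lia.
    pose proof (lt_0_INR d Hd1) as Hdp.
    assert (HdN : INR d <= x)
      by (pose proof (le_INR d (floor_nat x) ltac:(lia)); pose proof (floor_nat_spec x ltac:(lra)); lra).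
    rewrite Cnorm_scal, (Cnorm_weight sigma theta d Hd1), Rabs_mult.
    rewrite (Rabs_right (Rpower (INR d) beta)) by (left; apply Rpower_pos).
    assert (Hy : 1 <= x / INR d) by (apply (Rmult_le_reg_r (INR d)); [lra|]; field_simplify; lra).
    pose proof (Hrem _ Hy) as He. rewrite Rpower_div in He by lra.
    assert (Hinv : Rpower (INR d) beta * Rpower (INR d) (- beta) = 1)
      by (rewrite <- Rpower_plus, Rplus_opp_r; apply Rpower_O; lra).
    assert (Hdb : Rpower (INR d) beta * Rabs (power_sum_remainder beta c (x / INR d)) <= Kb * Rpower x beta).
    { apply Rle_trans with (Rpower (INR d) beta * (Kb * (Rpower x beta * Rpower (INR d) (- beta)))).
      - apply Rmult_le_compat_l; [left; apply Rpower_pos|exact He].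
      - right. transitivity (Kb * Rpower x beta * (Rpower (INR d) beta * Rpower (INR d) (- beta))); [ring|].
        rewrite Hinv. ring. }
    pose proof (weight_nonneg sigma theta d). pose proof (Rpower_pos (INR d) sigma).
    apply Rmult_le_compat_r; [nra|exact Hdb].
  - unfold rsum_to. rewrite rsum_scal. fold (rsum_to (floor_nat x) (fun d => weight sigma theta d * Rpower (INR d) sigma)).
    pose proof (weight_sum_le x sigma Hx Hsigma0) as Hs. pose proof (Rpower_pos x beta).
    apply Rle_trans with (Kb * Rpower x beta * (B * log_power sigma kappa x)).
    + apply Rmult_le_compat_l; [nra|exact Hs].
    + right. unfold log_power. rewrite Rpower_plus. ring.
Qed.

Lemma twisted_theta_sum_tail K3 : 0 <= K3 -> (sigma + beta < 0 -> tail_bound kappa (sigma + beta) K3) ->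
  exists Q, forall x, 2 <= x ->
    Cnorm (Csub (csum_to (floor_nat x) (fun d => Cscal (Rpower (INR d) beta) (theta d))) Q)
    <= (1 + K3) * B * log_power (sigma + beta) kappa x.
Proof.
  intros HK3 HT3. set (u := fun d => Cscal (Rpower (INR d) beta) (theta d)).
  assert (Hu : forall d, (1 <= d)%nat -> Cnorm (u d) = weight sigma theta d * Rpower (INR d) (sigma + beta)).
  { intros d Hd. unfold u. rewrite (Cnorm_scal_weight sigma) by (exact Hd || (left; apply Rpower_pos)).
    rewrite Rpower_plus. ring. }
  destruct (Rlt_dec (sigma + beta) 0) as [Hneg|Hnneg].
  - destruct (dominated_series_tail kappa (sigma + beta) K3 B (weight sigma theta) u Hkappa Hneg HK3 HB
      (HT3 Hneg) (weight_nonneg sigma theta) Hw) as [Q [_ HQ]].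
    { intros d Hd. rewrite Hu by exact Hd. lra. }
    exists Q. intros x Hx. specialize (HQ x Hx). pose proof (log_power_nonneg (sigma + beta) kappa x). nra.
  - exists Czero. intros x Hx.
    replace (Csub (csum_to (floor_nat x) u) Czero) with (csum_to (floor_nat x) u) by (Csplit; ring).
    eapply Rle_trans; [apply Cnorm_csum|].
    eapply Rle_trans; [|apply Rle_trans with (B * log_power (sigma + beta) kappa x)].
    + apply Req_le. apply rsum_ext. intros d Hd. apply in_seq in Hd. apply Hu. lia.
    + apply weight_sum_le; lra.
    + pose proof (log_power_nonneg (sigma + beta) kappa x).
      assert (0 <= K3 * B * log_power (sigma + beta) kappa x) by (apply Rmult_le_pos; [apply Rmult_le_pos|]; assumption). lra.
Qed.

Lemma main_term_power K1 S x : beta <> -1 -> 0 <= K1 -> tail_bound kappa (sigma - 1) K1 ->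
  Ccv (fun N => csum_to N (recip theta)) S -> 2 <= x ->
  Cnorm (Csub (csum_to (floor_nat x) (fun d => Cscal (Rpower (INR d) beta * M beta (x / INR d)) (theta d)))
              (Cscal (M beta x) S))
  <= K1 * Rabs (/ (beta + 1)) * B * log_power (sigma + beta) kappa x.
Proof.
  intros Hb HK1 HT1 HS Hx.
  replace (csum_to (floor_nat x) _) with (Cscal (M beta x) (csum_to (floor_nat x) (recip theta))).
  2:{ unfold csum_to, recip. Csplit; rewrite <- rsum_scal; apply rsum_ext; intros d Hd; apply in_seq in Hd;
      rewrite M_scaling_power by (lra || (apply lt_0_INR; lia)); unfold Rdiv; ring. }
  rewrite Cscal_sub, Cnorm_scal, M_neq by exact Hb.
  pose proof (recip_limit_dist sigma kappa K1 B theta HB HT1 Hw S x HS Hx) as Hd.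
  unfold Rdiv. rewrite Rabs_mult, (Rabs_right (Rpower x (beta + 1))) by (left; apply Rpower_pos).
  pose proof (Rabs_pos (/ (beta + 1))). pose proof (Rpower_pos x (beta + 1)).
  apply Rle_trans with (Rpower x (beta + 1) * Rabs (/ (beta + 1)) * (K1 * B * log_power (sigma - 1) kappa x)).
  - apply Rmult_le_compat_l; [nra|exact Hd].
  - right. unfold log_power. replace (sigma + beta) with ((beta + 1) + (sigma - 1)) by ring.
    rewrite (Rpower_plus (beta + 1) (sigma - 1) x). ring.
Qed.

Lemma log_recip_series_converges K2 : 0 <= K2 -> tail_bound kappa ((sigma - 1) / 2) K2 ->
  exists H, Ccv (fun N => csum_to N (fun d => Cscal (ln (INR d) / INR d) (theta d))) H.
Proof.
  intros HK2 HT2. set (dl := (1 - sigma) / 2).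
  assert (Hdl : 0 < dl) by (unfold dl; lra).
  set (a := fun d => / dl * weight sigma theta d).
  assert (Ha : forall d, 0 <= a d)
    by (intros; apply Rmult_le_pos; [left; apply Rinv_0_lt_compat; lra|apply weight_nonneg]).
  assert (HB2 : 0 <= / dl * B) by (apply Rmult_le_pos; [left; apply Rinv_0_lt_compat|]; lra).
  assert (Haw : log_power_bounded kappa (/ dl * B) a).
  { intros t Ht. unfold a, rsum_to. rewrite rsum_scal, Rmult_assoc.
    apply Rmult_le_compat_l; [left; apply Rinv_0_lt_compat; lra|apply Hw; exact Ht]. }
  destruct (dominated_series_tail kappa ((sigma - 1) / 2) K2 (/ dl * B) a
    (fun d => Cscal (ln (INR d) / INR d) (theta d)) Hkappa ltac:(lra) HK2 HB2 HT2 Ha Haw) as [H [HH _]].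
  2:{ exists H. exact HH. }
  intros d Hd. pose proof (lt_0_INR d Hd) as Hdp.
  assert (Hd1 : 1 <= INR d) by (apply (le_INR 1); exact Hd).
  assert (Hl0 : 0 <= ln (INR d)) by (rewrite <- ln_1; apply ln_le; lra).
  rewrite (Cnorm_scal_weight sigma) by (exact Hd || (apply Rmult_le_pos; [lra|left; apply Rinv_0_lt_compat; lra])).
  pose proof (ln_le_Rpower (INR d) dl Hd1 Hdl) as Hln.
  pose proof (weight_nonneg sigma theta d). pose proof (Rpower_pos (INR d) sigma).
  pose proof (Rinv_0_lt_compat _ Hdp).
  apply Rle_trans with (Rpower (INR d) dl / dl / INR d * weight sigma theta d * Rpower (INR d) sigma).
  - unfold Rdiv. apply Rmult_le_compat_r; [lra|]. apply Rmult_le_compat_r; [lra|]. apply Rmult_le_compat_r; [lra|].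
    exact Hln.
  - right. unfold a. replace ((sigma - 1) / 2) with (dl + -1 + sigma) by (unfold dl; field).
    unfold Rdiv. rewrite (Rinv_Rpower (INR d)), !Rpower_plus by lra. ring.
Qed.

(* For [d > x], [ln (d / x) <= (d / x)^delta / delta] with [delta = (1 - sigma) / 2]. *)
Lemma log_main_term_increment K2 x M : 0 <= K2 -> tail_bound kappa ((sigma - 1) / 2) K2 -> 2 <= x ->
  (floor_nat x <= M)%nat ->
  let w := fun d => Cscal ((ln x - ln (INR d)) / INR d) (theta d) in
  Cnorm (Csub (csum_to M w) (csum_to (floor_nat x) w))
  <= 2 * K2 / (1 - sigma) * B * log_power (sigma - 1) kappa x.
Proof.
  intros HK2 HT2 Hx HM w. set (dl := (1 - sigma) / 2).
  assert (Hdl : 0 < dl) by (unfold dl; lra).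
  set (g2 := fun d => weight sigma theta d * Rpower (INR d) ((sigma - 1) / 2)).
  pose proof (floor_nat_spec x ltac:(lra)) as Hfl.
  eapply Rle_trans.
  - apply (csum_to_diff_le w (fun d => / dl * Rpower x (- dl) * g2 d) (floor_nat x) M HM).
    intros d Hd. pose proof (lt_0_INR d ltac:(lia)) as Hdp.
    assert (Hdx : x < INR d) by (pose proof (le_INR (S (floor_nat x)) d ltac:(lia)); rewrite S_INR in H; lra).
    assert (Hneg : ln x - ln (INR d) <= 0) by (pose proof (ln_increasing x (INR d) ltac:(lra) Hdx); lra).
    pose proof (Rinv_0_lt_compat _ Hdp) as Hid.
    unfold w. rewrite Cnorm_scal, (Cnorm_weight sigma theta d) by lia.
    rewrite Rabs_left1 by (unfold Rdiv; nra).
    assert (Hq1 : 1 <= INR d / x) by (apply (Rmult_le_reg_r x); [lra|]; field_simplify; lra).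
    pose proof (ln_le_Rpower (INR d / x) dl Hq1 Hdl) as Hln.
    rewrite Rpower_div in Hln by lra.
    replace (ln (INR d / x)) with (ln (INR d) - ln x) in Hln
      by (unfold Rdiv; rewrite ln_mult, ln_Rinv by (try apply Rinv_0_lt_compat; lra); ring).
    pose proof (weight_nonneg sigma theta d). pose proof (Rpower_pos (INR d) sigma).
    apply Rle_trans with (Rpower (INR d) dl * Rpower x (- dl) / dl / INR d * (weight sigma theta d * Rpower (INR d) sigma)).
    + unfold Rdiv. apply Rmult_le_compat_r; [nra|]. rewrite Ropp_mult_distr_l.
      apply Rmult_le_compat_r; [lra|]. unfold Rdiv in Hln. lra.
    + right. unfold g2. replace ((sigma - 1) / 2) with (dl + -1 + sigma) by (unfold dl; field).
      unfold Rdiv. rewrite (Rinv_Rpower (INR d)), !Rpower_plus by lra. ring.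
  - unfold rsum_to. rewrite !rsum_scal. fold (rsum_to M g2) (rsum_to (floor_nat x) g2).
    pose proof (HT2 (weight sigma theta) B (weight_nonneg sigma theta) HB Hw x Hx M HM) as HT.
    fold g2 in HT.
    assert (Hc0 : 0 <= / dl * Rpower x (- dl))
      by (apply Rmult_le_pos; [left; apply Rinv_0_lt_compat; lra|left; apply Rpower_pos]).
    replace (/ dl * Rpower x (- dl) * rsum_to M g2 - / dl * Rpower x (- dl) * rsum_to (floor_nat x) g2)
      with (/ dl * Rpower x (- dl) * (rsum_to M g2 - rsum_to (floor_nat x) g2)) by ring.
    eapply Rle_trans; [apply Rmult_le_compat_l; [exact Hc0|exact HT]|].
    right. unfold log_power.
    replace (sigma - 1) with (- dl + (sigma - 1) / 2) at 2 by (unfold dl; field).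
    rewrite Rpower_plus. unfold dl. field. lra.
Qed.

Lemma main_term_log K2 S : beta = -1 -> 0 <= K2 -> tail_bound kappa ((sigma - 1) / 2) K2 ->
  Ccv (fun N => csum_to N (recip theta)) S ->
  exists H, forall x, 2 <= x ->
    Cnorm (Csub (csum_to (floor_nat x) (fun d => Cscal (Rpower (INR d) beta * M beta (x / INR d)) (theta d)))
                (Cadd (Cscal (M beta x) S) (Cscal (-1) H)))
    <= 2 * K2 / (1 - sigma) * B * log_power (sigma + beta) kappa x.
Proof.
  intros Hb HK2 HT2 HS.
  destruct (log_recip_series_converges K2 HK2 HT2) as [H HH].
  exists H. intros x Hx.
  set (h := fun d => Cscal (ln (INR d) / INR d) (theta d)).
  set (w := fun d => Cscal ((ln x - ln (INR d)) / INR d) (theta d)).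
  replace (csum_to (floor_nat x) (fun d => Cscal (Rpower (INR d) beta * M beta (x / INR d)) (theta d)))
    with (csum_to (floor_nat x) w).
  2:{ apply csum_ext. intros d Hd. apply in_seq in Hd. unfold w.
      rewrite M_scaling_log by (exact Hb || lra || (apply lt_0_INR; lia)). reflexivity. }
  rewrite (M_eq beta x Hb). replace (sigma + beta) with (sigma - 1) by (rewrite Hb; ring).
  apply (Ccv_dist_le (fun N => csum_to N w)).
  - replace (fun N => csum_to N w)
      with (fun N => Cadd (Cscal (ln x) (csum_to N (recip theta))) (Cscal (-1) (csum_to N h))).
    + apply Ccv_lin; assumption.
    + apply functional_extensionality. intros N. unfold w, h, csum_to, recip.
      Csplit; rewrite <- !rsum_scal, <- rsum_plus; apply rsum_ext; intros d _; unfold Rdiv; ring.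
  - intros N HN. apply log_main_term_increment; assumption.
Qed.

Lemma main_term_asymptotic K1 K2 S : 0 <= K1 -> tail_bound kappa (sigma - 1) K1 ->
  0 <= K2 -> tail_bound kappa ((sigma - 1) / 2) K2 -> Ccv (fun N => csum_to N (recip theta)) S ->
  exists C1, forall x, 2 <= x ->
    Cnorm (Csub (csum_to (floor_nat x) (fun d => Cscal (Rpower (INR d) beta * M beta (x / INR d)) (theta d)))
                (Cadd (Cscal (M beta x) S) C1))
    <= (K1 * Rabs (/ (beta + 1)) + 2 * K2 / (1 - sigma)) * B * log_power (sigma + beta) kappa x.
Proof.
  intros HK1 HT1 HK2 HT2 HS.
  assert (Hnonneg : forall x, 0 <= K1 * Rabs (/ (beta + 1)) * B * log_power (sigma + beta) kappa x /\
                              0 <= 2 * K2 / (1 - sigma) * B * log_power (sigma + beta) kappa x).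
  { intros x. pose proof (log_power_nonneg (sigma + beta) kappa x). pose proof (Rabs_pos (/ (beta + 1))).
    assert (0 <= 2 * K2 / (1 - sigma)) by (apply Rmult_le_pos; [lra|left; apply Rinv_0_lt_compat; lra]).
    assert (0 <= K1 * Rabs (/ (beta + 1))) by (apply Rmult_le_pos; lra).
    split; (apply Rmult_le_pos; [apply Rmult_le_pos|]); lra. }
  destruct (Req_EM_T beta (-1)) as [Hb|Hb].
  - destruct (main_term_log K2 S Hb HK2 HT2 HS) as [H HH]. exists (Cscal (-1) H). intros x Hx.
    specialize (HH x Hx). specialize (Hnonneg x). lra.
  - exists Czero. intros x Hx.
    replace (Cadd (Cscal (M beta x) S) Czero) with (Cscal (M beta x) S) by (destruct S; Csplit; ring).
    pose proof (main_term_power K1 S x Hb HK1 HT1 HS Hx). specialize (Hnonneg x). lra.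
Qed.

Lemma phi_sum_asymptotic_fixed Kb c K1 K2 K3 S :
  0 <= Kb -> (forall y, 1 <= y -> Rabs (power_sum_remainder beta c y) <= Kb * Rpower y beta) ->
  0 <= K1 -> tail_bound kappa (sigma - 1) K1 -> 0 <= K2 -> tail_bound kappa ((sigma - 1) / 2) K2 ->
  0 <= K3 -> (sigma + beta < 0 -> tail_bound kappa (sigma + beta) K3) ->
  Ccv (fun N => csum_to N (recip theta)) S ->
  exists C, forall x, 2 <= x ->
    Cnorm (Csub (sumC_le x (fun n => Cscal (Rpower (INR n) beta) (phi_theta theta n)))
                (Cadd (Cscal (M beta x) S) C))
    <= (K1 * Rabs (/ (beta + 1)) + 2 * K2 / (1 - sigma) + Rabs c * (1 + K3) + Kb) * B
       * log_power (sigma + beta) kappa x.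
Proof.
  intros HKb Hrem HK1 HT1 HK2 HT2 HK3 HT3 HS.
  destruct (main_term_asymptotic K1 K2 S HK1 HT1 HK2 HT2 HS) as [C1 HC1].
  destruct (twisted_theta_sum_tail K3 HK3 HT3) as [Q HQ].
  exists (Cadd C1 (Cscal c Q)). intros x Hx.
  rewrite (phi_sum_split theta beta c x) by lra.
  eapply Rle_trans; [apply Cnorm_three_terms_le;
    [apply HC1 | apply HQ | apply (remainder_contribution_le Kb c)]; assumption|].
  right. ring.
Qed.

End PhiSumAsymptotic.

Lemma phi_sum_asymptotic sigma kappa beta K1 : 0 <= sigma -> sigma < 1 -> 0 <= kappa -> 0 <= K1 ->
  tail_bound kappa (sigma - 1) K1 ->
  exists K, forall theta B, 0 <= B -> log_power_bounded kappa B (weight sigma theta) ->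
    forall S, Ccv (fun N => csum_to N (recip theta)) S ->
    exists C, forall x, 2 <= x ->
      Cnorm (Csub (sumC_le x (fun n => Cscal (Rpower (INR n) beta) (phi_theta theta n)))
                  (Cadd (Cscal (M beta x) S) C))
      <= K * B * log_power (sigma + beta) kappa x.
Proof.
  intros Hs0 Hs1 Hk HK1 HT1.
  destruct (power_sum_asymptotic beta) as [c [Kb [HKb Hrem]]].
  destruct (dyadic_tail_bound kappa ((sigma - 1) / 2) Hk ltac:(lra)) as [K2 [HK2 HT2]].
  assert (HK3 : exists K3, 0 <= K3 /\ (sigma + beta < 0 -> tail_bound kappa (sigma + beta) K3)).
  { destruct (Rlt_dec (sigma + beta) 0) as [Hneg|Hnneg].
    - destruct (dyadic_tail_bound kappa (sigma + beta) Hk Hneg) as [K3 HK3]. exists K3. tauto.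
    - exists 0. split; [lra|]. intros; contradiction. }
  destruct HK3 as [K3 [HK3 HT3]].
  exists (K1 * Rabs (/ (beta + 1)) + 2 * K2 / (1 - sigma) + Rabs c * (1 + K3) + Kb).
  intros theta B HB Hw S HS.
  apply (phi_sum_asymptotic_fixed sigma kappa beta B theta); assumption.
Qed.

Theorem mainTheorem4 :
  forall sigma kappa A beta : R,
    0 <= sigma -> sigma < 1 -> 0 <= kappa -> 0 <= A ->
    exists K : R,
      forall theta : nat -> Cx,
        multiplicative_sqfree theta ->
        Condition1 theta sigma kappa A ->
        (exists L : R,
           Un_cv (fun N => sumR_primes_le (INR N) (fun p => Cnorm (theta p) / INR p)) L) /\
        exists S : Cx,
          Ccv (fun N => prodC_primes_le (INR N)
                          (fun p => Cadd Cone (Cscal (/ INR p) (theta p)))) S /\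
          exists C : Cx,
            forall x : R, 2 <= x ->
              Cnorm (Csub (sumC_le x (fun n => Cscal (Rpower (INR n) beta) (phi_theta theta n)))
                          (Cadd (Cscal (M beta x) S) C))
              <= K * (Rpower x (sigma + beta) * Rpower (ln x) kappa).
Proof.
  intros sigma kappa A beta Hs0 Hs1 Hk _.
  destruct (dyadic_tail_bound kappa (sigma - 1) Hk ltac:(lra)) as [K1 [HK1 HT1]].
  destruct (phi_sum_asymptotic sigma kappa beta K1 Hs0 Hs1 Hk HK1 HT1) as [K HK].
  exists (K * exp A). intros theta Hm Hc.
  pose proof (weight_log_power_bounded theta sigma kappa A Hm Hc) as Hw.
  assert (HB : 0 <= exp A) by (left; apply exp_pos).
  split; [exact (prime_reciprocal_series_converges sigma kappa K1 (exp A) theta HK1 HB HT1 Hw)|].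
  destruct (recip_series_converges sigma kappa K1 (exp A) theta Hs1 Hk HK1 HB HT1 Hw) as [S HS].
  exists S. split; [exact (euler_product_converges sigma kappa K1 (exp A) theta Hs1 Hk HK1 HB HT1 Hw S Hm HS)|].
  exact (HK theta (exp A) HB Hw S HS).
Qed.
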